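(* Let $m>0$ be a scalar, $D\in\mathbb{R}^{3\times3}$ a symmetric positive definite matrix, $W\in\mathbb{R}^{3\times 3}$ a symmetric positive definite weight matrix, and $\Phi:[0,\infty)\to[0,\infty)$ a smooth function with $\Phi(0)=0$ and $\Phi'(x)>0$ for all $x\ge 0$. Let $t\mapsto \Omega^m(t)\in\mathbb{R}^3$, $t\mapsto E(t)\in\mathbb{R}^{3\times3}$ and $t\mapsto U^m(t)\in\mathbb{R}^{3\times3}$ be smooth functions of time (measured angular velocity, matrix of known inertial directions, and matrix of measured body-frame directions, respectively), and set $L(t)=E(t)\,W\,U^m(t)^{\mathsf T}$. Consider the continuous-time filter on $\mathrm{SO}(3)\times\mathbb{R}^3$ with state $(\hat R,\omega)$: $$\dot{\hat R}=\hat R\,\hat\Omega^\times,\qquad \hat\Omega=\Omega^m-\omega,\qquad m\dot\omega=-m\,\hat\Omega\times\omega+\Phi'\big(\mathcal U^0(\hat R,U^m)\big)\,S_L(\hat R)-D\omega,$$ where $\mathcal U^0(\hat R,U^m)=\tfrac12\langle E-\hat R U^m,(E-\hat RU^m)W\rangle$ and $S_L(\hat R)=\mathrm{vex}(L^{\mathsf T}\hat R-\hat R^{\mathsf T}L)$, all quantities evaluated at time $t$. For a time step $h>0$ and $t_i=t_0+ih$, write $\Omega^m_i=\Omega^m(t_i)$, $E_i=E(t_i)$, $U^m_i=U^m(t_i)$, $L_i=E_iWU^{m\,\mathsf T}_i$, and define the discrete-time filter $(\hat R_i,\omega_i)\mapsto(\hat R_{i+1},\omega_{i+1})$ by $$\omega_{i+\frac12}=\Big(mI_{3\times3}+\tfrac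 h2 D\Big)^{-1}\Big\{\exp\big(-\tfrac h2\hat\Omega_i^\times\big)\,m\,\omega_i+\tfrac h2\,\Phi'\big(\mathcal U^0_i(\hat R_i,U^m_i)\big)S_{L_i}(\hat R_i)\Big\},$$ $$\hat R_{i+1}=\hat R_i\exp\big(h(\Omega^m_{i+\frac12}-\omega_{i+\frac12})^\times\big),\qquad \Omega^m_{i+\frac12}=\tfrac12(\Omega^m_i+\Omega^m_{i+1}),$$ $$m\,\omega_{i+1}=\exp\big(-\tfrac h2\hat\Omega_{i+1}^\times\big)\Big\{\big(mI_{3\times3}-\tfrac h2D\big)\omega_{i+\frac12}+\tfrac h2\,\Phi'\big(\mathcal U^0_{i+1}(\hat R_{i+1},U^m_{i+1})\big)S_{L_{i+1}}(\hat R_{i+1})\Big\},$$ with $\hat\Omega_i=\Omega^m_i-\omega_i$ (so the last equation is implicit in $\omega_{i+1}$), where $\mathcal U^0_i(\hat R,U)=\tfrac12\langle E_i-\hat RU,(E_i-\hat RU)W\rangle$. Then, for all sufficiently small $h$, this discrete-time filter is a second-order numerical integrator of the continuous-time filter: the local error of one step (starting from the exact state at $t_i$) is $O(h^3)$ as $h\to0$.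
   Context: For $x\in\mathbb{R}^3$, $x^\times\in\mathfrak{so}(3)$ denotes the skew-symmetric matrix with $x^\times y=x\times y$ for all $y\in\mathbb{R}^3$, and $\mathrm{vex}:\mathfrak{so}(3)\to\mathbb{R}^3$ is its inverse. $\exp$ denotes the matrix exponential (mapping $\mathfrak{so}(3)$ to $\mathrm{SO}(3)$). $\langle A,B\rangle=\mathrm{tr}(A^{\mathsf T}B)$ is the trace inner product on $3\times3$ matrices. In the attitude-estimation setting, $E=[e_1\ e_2\ e_1\times e_2]$ collects two known inertial direction vectors and their cross product, and $U^m=[u^m_1\ u^m_2\ u^m_1\times u^m_2]$ collects the corresponding measured body-frame vectors; $\hat R$ is the estimated rotation matrix from body to inertial frame and $\omega$ is the angular velocity estimation error, with $\hat\Omega=\Omega^m-\omega$ the estimated angular velocity. $\mathcal U^0$ is a generalized Wahba cost. *)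

From Stdlib Require Import Reals Lra Arith Factorial ClassicalEpsilon.
Open Scope R_scope.

Inductive I3 : Type := I0 | I1 | I2.

Definition Vec := I3 -> R.
Definition Mat := I3 -> I3 -> R.

Definition I3_eqb (i j : I3) : bool :=
  match i, j with
  | I0, I0 | I1, I1 | I2, I2 => true
  | _, _ => false
  end.

Definition nxt (i : I3) : I3 := match i with I0 => I1 | I1 => I2 | I2 => I0 end.

Definition sum3 (f : I3 -> R) : R := f I0 + f I1 + f I2.

Definition vec3 (a b c : R) : Vec := fun i => match i with I0 => a | I1 => b | I2 => c end.

Definition vadd (u v : Vec) : Vec := fun i => u i + v i.
Definition vsub (u v : Vec) : Vec := fun i => u i - v i.
Definition vscale (c : R) (v : Vec) : Vec := fun i => c * v i.
Definition vdot (u v : Vec) : R := sum3 (fun i => u i * v i).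

Definition cross (u v : Vec) : Vec :=
  vec3 (u I1 * v I2 - u I2 * v I1)
       (u I2 * v I0 - u I0 * v I2)
       (u I0 * v I1 - u I1 * v I0).

Definition mzero : Mat := fun _ _ => 0.
Definition mid : Mat := fun i j => if I3_eqb i j then 1 else 0.
Definition madd (A B : Mat) : Mat := fun i j => A i j + B i j.
Definition msub (A B : Mat) : Mat := fun i j => A i j - B i j.
Definition mscale (c : R) (A : Mat) : Mat := fun i j => c * A i j.
Definition mtr (A : Mat) : Mat := fun i j => A j i.
Definition mmul (A B : Mat) : Mat := fun i j => sum3 (fun k => A i k * B k j).
Definition mvmul (A : Mat) (v : Vec) : Vec := fun i => sum3 (fun k => A i k * v k).
Definition trace (A : Mat) : R := A I0 I0 + A I1 I1 + A I2 I2.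

Definition frob (A B : Mat) : R := trace (mmul (mtr A) B).

(** x^\times : the skew-symmetric matrix with (x^\times) y = x \times y *)
Definition skew (v : Vec) : Mat := fun i j =>
  match i, j with
  | I0, I0 => 0      | I0, I1 => - v I2 | I0, I2 => v I1
  | I1, I0 => v I2   | I1, I1 => 0      | I1, I2 => - v I0
  | I2, I0 => - v I1 | I2, I1 => v I0   | I2, I2 => 0
  end.

Definition vex (M : Mat) : Vec := vec3 (M I2 I1) (M I0 I2) (M I1 I0).

Definition cof (A : Mat) (i j : I3) : R :=
  A (nxt i) (nxt j) * A (nxt (nxt i)) (nxt (nxt j))
  - A (nxt i) (nxt (nxt j)) * A (nxt (nxt i)) (nxt j).
Definition det3 (A : Mat) : R := sum3 (fun j => A I0 j * cof A I0 j).
Definition inv3 (A : Mat) : Mat := fun i j => cof A j i / det3 A.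

Fixpoint mpow (A : Mat) (n : nat) : Mat :=
  match n with O => mid | S k => mmul A (mpow A k) end.

Definition is_mexp (A M : Mat) : Prop :=
  forall i j, Un_cv (fun n => sum_f_R0 (fun k => mpow A k i j / INR (fact k)) n) (M i j).

Definition mexp (A : Mat) : Mat := epsilon (inhabits mzero) (is_mexp A).

Definition is_rotation (A : Mat) : Prop := mmul (mtr A) A = mid /\ det3 A = 1.
Definition symmetric (A : Mat) : Prop := forall i j, A i j = A j i.
Definition pos_def (A : Mat) : Prop :=
  forall v : Vec, (exists i, v i <> 0) -> vdot v (mvmul A v) > 0.

Definition smooth (f : R -> R) : Prop :=
  exists F : nat -> R -> R, F O = f /\ forall n x, derivable_pt_lim (F n) x (F (S n) x).

Definition vnorm (v : Vec) : R := sum3 (fun i => Rabs (v i)).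
Definition mnorm (A : Mat) : R := sum3 (fun i => sum3 (fun j => Rabs (A i j))).

Definition U0 (E W Rh U : Mat) : R :=
  / 2 * frob (msub E (mmul Rh U)) (mmul (msub E (mmul Rh U)) W).
Definition Lmat (E W U : Mat) : Mat := mmul (mmul E W) (mtr U).
Definition SL (L Rh : Mat) : Vec := vex (msub (mmul (mtr L) Rh) (mmul (mtr Rh) L)).

(** The one-step map of the scheme and the exact flow are compared through their
    Taylor expansions in the step [h] up to order two.  Matrix exponentials of
    skew matrices are evaluated in closed form by Rodrigues' formula, whose
    coefficients are Lipschitz near [0]; this reduces every ingredient of the
    scheme (the inverse of [m I + h/2 D], the rotations, the cost and the
    feedback) to a smooth function of [h], whose expansion is computed by a
    small calculus of second-order expansions.  The exact solution is expanded
    by bootstrapping the ODE twice through the same calculus.  For the implicit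
    equation defining [w_{i+1}], the right-hand side is a rotation applied to a
    fixed vector, so every solution is bounded, and on that bounded set the
    equation is a contraction of rate [O(h)]: a solution exists, and any solution
    is within [O(h^3)] of the exact [w(t0 + h)], which satisfies the equation up
    to a residual of order [h^3]. *)

From Stdlib Require Import Reals Lra Lia Factorial ClassicalEpsilon FunctionalExtensionality.
From Coquelicot Require Coquelicot.
Open Scope R_scope.

(** * Rodrigues' formula *)

(* [sinc_sqrt x = sin (sqrt x) / sqrt x] and [versc_sqrt x = (1 - cos (sqrt x)) / x],
   as power series in [x]; for [v] with [x = |v|^2] they are the coefficients of
   [v^x] and [(v^x)^2] in [exp (v^x)]. *)
Definition sinc_partial (n : nat) (x : R) := sum_f_R0 (fun i => sin_n i * x ^ i) n.
Definition cos_partial (n : nat) (x : R) := sum_f_R0 (fun i => cos_n i * x ^ i) n.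
Definition versc_coef (i : nat) : R := (-1) ^ i / INR (fact (2 * i + 2)).
Definition versc_partial (n : nat) (x : R) := sum_f_R0 (fun i => versc_coef i * x ^ i) n.

Definition sinc_sqrt (x : R) : R := proj1_sig (exist_sin x).
Definition cos_sqrt (x : R) : R := proj1_sig (exist_cos x).
Definition versc_sqrt (x : R) : R := if Req_EM_T x 0 then / 2 else (1 - cos_sqrt x) / x.

Lemma Un_cv_ext (u v : nat -> R) l : (forall n, u n = v n) -> Un_cv u l -> Un_cv v l.
Proof.
  intros H Hu eps He. destruct (Hu eps He) as [N HN].
  exists N. intros n Hn. rewrite <- H. apply HN; auto.
Qed.

Lemma Un_cv_const (c : R) : Un_cv (fun _ => c) c.
Proof. intros eps He. exists 0%nat. intros. unfold Rdist. rewrite Rminus_diag, Rabs_R0. lra. Qed.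

Lemma sinc_sqrt_cv x : Un_cv (fun n => sinc_partial n x) (sinc_sqrt x).
Proof. unfold sinc_sqrt. destruct (exist_sin x) as [a Ha]. exact Ha. Qed.

Lemma cos_sqrt_cv x : Un_cv (fun n => cos_partial n x) (cos_sqrt x).
Proof. unfold cos_sqrt. destruct (exist_cos x) as [a Ha]. exact Ha. Qed.

Lemma versc_partial_mul n x : x * versc_partial n x = 1 - cos_partial (S n) x.
Proof.
  induction n as [|n IH].
  - unfold versc_partial, cos_partial, versc_coef, cos_n. simpl. field.
  - unfold versc_partial, cos_partial in *. simpl sum_f_R0 at 1 2.
    rewrite Rmult_plus_distr_l, IH. simpl sum_f_R0. unfold versc_coef, cos_n.
    replace (2 * S (S n))%nat with (2 * S n + 2)%nat by lia.
    simpl pow. field. split; apply INR_fact_neq_0.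
Qed.

Lemma versc_sqrt_cv x : Un_cv (fun n => versc_partial n x) (versc_sqrt x).
Proof.
  unfold versc_sqrt. destruct (Req_EM_T x 0) as [H0|H0].
  - subst. apply Un_cv_ext with (fun _ => / 2); [|apply Un_cv_const].
    induction n as [|n IH].
    + unfold versc_partial, versc_coef. simpl. field.
    + unfold versc_partial in *. simpl sum_f_R0. rewrite <- IH. simpl. ring.
  - apply Un_cv_ext with (fun n => (1 - cos_partial (n + 1) x) * / x).
    + intros n. replace (n + 1)%nat with (S n) by lia. rewrite <- versc_partial_mul. field. auto.
    + apply CV_mult; [|apply Un_cv_const].
      apply CV_minus; [apply Un_cv_const|]. apply CV_shift'. apply cos_sqrt_cv.
Qed.

Lemma sinc_sqrt0 : sinc_sqrt 0 = 1.
Proof.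
  apply UL_sequence with (fun n => sinc_partial n 0); [apply sinc_sqrt_cv|].
  apply Un_cv_ext with (fun _ => 1); [|apply Un_cv_const].
  induction n as [|n IH].
  - unfold sinc_partial, sin_n. simpl. field.
  - unfold sinc_partial in *. simpl sum_f_R0. rewrite <- IH. simpl. ring.
Qed.

Lemma versc_sqrt0 : versc_sqrt 0 = / 2.
Proof. unfold versc_sqrt. destruct (Req_EM_T 0 0); [auto|lra]. Qed.

(* The identity behind the orthogonality of [exp (v^x)]; it is [sin^2 + cos^2 = 1] at [sqrt x]. *)
Lemma rodrigues_coef_identity x : 0 <= x ->
  2 * versc_sqrt x - sinc_sqrt x ^ 2 - x * versc_sqrt x ^ 2 = 0.
Proof.
  intros Hx. destruct (Req_EM_T x 0) as [H0|H0].
  { subst. rewrite sinc_sqrt0, versc_sqrt0. field. }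
  assert (Hs : sin (sqrt x) = sqrt x * sinc_sqrt x).
  { unfold sin. destruct (exist_sin (Rsqr (sqrt x))) as [a Ha].
    rewrite Rsqr_sqrt in Ha by lra. f_equal. eapply uniqueness_sum. exact Ha.
    apply sinc_sqrt_cv. }
  assert (Hc : cos (sqrt x) = 1 - x * versc_sqrt x).
  { unfold cos. destruct (exist_cos (Rsqr (sqrt x))) as [a Ha].
    rewrite Rsqr_sqrt in Ha by lra. unfold versc_sqrt.
    destruct (Req_EM_T x 0); [contradiction|].
    replace (1 - x * ((1 - cos_sqrt x) / x)) with (cos_sqrt x) by (field; auto).
    eapply uniqueness_sum. exact Ha. apply cos_sqrt_cv. }
  pose proof (sin2_cos2 (sqrt x)) as E. rewrite Hs, Hc in E. unfold Rsqr in E.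
  replace (sqrt x * sinc_sqrt x * (sqrt x * sinc_sqrt x))
    with (sinc_sqrt x * sinc_sqrt x * (sqrt x * sqrt x)) in E by ring.
  rewrite sqrt_sqrt in E by lra.
  assert (E2 : x * (2 * versc_sqrt x - sinc_sqrt x ^ 2 - x * versc_sqrt x ^ 2) = 0) by nra.
  apply Rmult_integral in E2. destruct E2; [contradiction|auto].
Qed.

Definition rodrigues (v : Vec) : Mat :=
  madd mid (madd (mscale (sinc_sqrt (vdot v v)) (skew v))
                 (mscale (versc_sqrt (vdot v v)) (mmul (skew v) (skew v)))).

Definition mexp_partial (A : Mat) (N : nat) (i j : I3) : R :=
  sum_f_R0 (fun k => mpow A k i j / INR (fact k)) N.

Section SkewPowers.
Variable v : Vec.
Let K := skew v.
Let x := vdot v v.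

Lemma skew_cube_scaled c (P : Mat) : (forall a b, P a b = c * K a b) ->
  forall i k, mmul K (mmul K P) i k = - x * c * K i k.
Proof.
  intros H i k. unfold mmul, sum3. rewrite !H. unfold x, vdot, sum3, K.
  destruct i, k; simpl; ring.
Qed.

Lemma skew_pow4_scaled c (P : Mat) : (forall a b, P a b = c * mmul K K a b) ->
  forall i k, mmul K (mmul K P) i k = - x * c * mmul K K i k.
Proof.
  intros H i k. unfold mmul at 1 2. unfold sum3. rewrite !H.
  unfold x, vdot, mmul, sum3, K. destruct i, k; simpl; ring.
Qed.

Lemma mpow_skew_odd j : forall i k, mpow K (2 * j + 1) i k = (-1) ^ j * x ^ j * K i k.
Proof.
  induction j as [|j IH]; intros i k.
  - simpl. unfold mmul, mid, sum3, K. destruct i, k; simpl; ring.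
  - replace (2 * S j + 1)%nat with (S (S (2 * j + 1))) by lia. simpl mpow.
    rewrite (skew_cube_scaled ((-1)^j * x^j) _ IH). simpl. ring.
Qed.

Lemma mpow_skew_even j : forall i k, mpow K (2 * j + 2) i k = (-1) ^ j * x ^ j * mmul K K i k.
Proof.
  induction j as [|j IH]; intros i k.
  - simpl. unfold mmul, mid, sum3, K. destruct i, k; simpl; ring.
  - replace (2 * S j + 2)%nat with (S (S (2 * j + 2))) by lia. simpl mpow.
    rewrite (skew_pow4_scaled ((-1)^j * x^j) _ IH). simpl. ring.
Qed.

Lemma mexp_partial_skew_even n i k : mexp_partial K (2 * n + 2) i k =
  mid i k + sinc_partial n x * K i k + versc_partial n x * mmul K K i k.
Proof.
  induction n as [|n IH].
  - pose proof (mpow_skew_odd 0 i k) as H1. pose proof (mpow_skew_even 0 i k) as H2.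
    unfold mexp_partial, sinc_partial, versc_partial, versc_coef, sin_n. simpl in H1, H2 |- *.
    rewrite H1, H2. field.
  - replace (2 * S n + 2)%nat with (S (S (2 * n + 2))) by lia.
    unfold mexp_partial in *. rewrite !tech5, IH.
    replace (S (2 * n + 2)) with (2 * S n + 1)%nat by lia.
    replace (S (2 * S n + 1)) with (2 * S n + 2)%nat by lia.
    rewrite mpow_skew_odd, mpow_skew_even. unfold sinc_partial, versc_partial. rewrite !tech5.
    unfold sin_n, versc_coef. field. split; apply INR_fact_neq_0.
Qed.

Lemma mexp_partial_skew_odd n i k : mexp_partial K (2 * n + 3) i k =
  mid i k + sinc_partial (S n) x * K i k + versc_partial n x * mmul K K i k.
Proof.
  replace (2 * n + 3)%nat with (S (2 * n + 2)) by lia. unfold mexp_partial. rewrite tech5.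
  fold (mexp_partial K (2 * n + 2) i k). rewrite mexp_partial_skew_even.
  replace (S (2 * n + 2)) with (2 * S n + 1)%nat by lia.
  rewrite mpow_skew_odd. unfold sinc_partial. rewrite tech5. unfold sin_n. field. apply INR_fact_neq_0.
Qed.

End SkewPowers.

Lemma Un_cv_even_odd (u : nat -> R) l :
  Un_cv (fun n => u (2 * n + 2)%nat) l -> Un_cv (fun n => u (2 * n + 3)%nat) l -> Un_cv u l.
Proof.
  intros H1 H2 eps He. destruct (H1 eps He) as [N1 HN1]. destruct (H2 eps He) as [N2 HN2].
  exists (2 * (N1 + N2) + 3)%nat. intros n Hn.
  destruct (Nat.Even_or_Odd n) as [[m Hm]|[m Hm]].
  - replace n with (2 * (m - 1) + 2)%nat by lia. apply HN1. lia.
  - replace n with (2 * (m - 1) + 3)%nat by lia. apply HN2. lia.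
Qed.

Lemma is_mexp_skew (v : Vec) : is_mexp (skew v) (rodrigues v).
Proof.
  intros i j. unfold rodrigues, madd, mscale. apply Un_cv_even_odd.
  - apply Un_cv_ext with (fun n => mid i j + (sinc_partial n (vdot v v) * skew v i j
      + versc_partial n (vdot v v) * mmul (skew v) (skew v) i j)).
    + intros n. transitivity (mexp_partial (skew v) (2 * n + 2) i j); [|reflexivity].
      rewrite mexp_partial_skew_even. ring.
    + apply CV_plus; [apply Un_cv_const|]. apply CV_plus; apply CV_mult;
        auto using sinc_sqrt_cv, versc_sqrt_cv, Un_cv_const.
  - apply Un_cv_ext with (fun n => mid i j + (sinc_partial (n + 1) (vdot v v) * skew v i j
      + versc_partial n (vdot v v) * mmul (skew v) (skew v) i j)).
    + intros n. transitivity (mexp_partial (skew v) (2 * n + 3) i j); [|reflexivity].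
      rewrite mexp_partial_skew_odd. replace (n + 1)%nat with (S n) by lia. ring.
    + apply CV_plus; [apply Un_cv_const|].
      apply CV_plus; apply CV_mult; try apply Un_cv_const.
      * apply (CV_shift' (fun n => sinc_partial n (vdot v v))), sinc_sqrt_cv.
      * apply versc_sqrt_cv.
Qed.

Lemma mexp_skew (v : Vec) : mexp (skew v) = rodrigues v.
Proof.
  assert (H : is_mexp (skew v) (mexp (skew v))).
  { unfold mexp. apply epsilon_spec. exists (rodrigues v). apply is_mexp_skew. }
  apply functional_extensionality; intro i. apply functional_extensionality; intro j.
  exact (UL_sequence _ _ _ (H i j) (is_mexp_skew v i j)).
Qed.

Lemma vdot_self_ge0 v : 0 <= vdot v v.
Proof. unfold vdot, sum3. nra. Qed.

Lemma rodrigues_isometry v u : vdot (mvmul (rodrigues v) u) (mvmul (rodrigues v) u) = vdot u u.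
Proof.
  pose proof (rodrigues_coef_identity (vdot v v) (vdot_self_ge0 v)) as E.
  set (a := sinc_sqrt (vdot v v)) in *. set (b := versc_sqrt (vdot v v)) in *.
  transitivity (vdot u u + (2 * b - a ^ 2 - vdot v v * b ^ 2) *
     ((vdot v u) ^ 2 - vdot v v * vdot u u)).
  - unfold rodrigues. fold a b. unfold mvmul, madd, mscale, mmul, mid, skew, vdot, sum3. simpl. ring.
  - rewrite E. ring.
Qed.

Lemma pow_lipschitz_unit i x y : 0 <= x <= 1 -> 0 <= y <= 1 ->
  Rabs (x ^ i - y ^ i) <= INR i * Rabs (x - y).
Proof.
  intros Hx Hy. induction i as [|i IH].
  - simpl. rewrite Rminus_diag, Rabs_R0. lra.
  - replace (x ^ S i - y ^ S i) with (x * (x ^ i - y ^ i) + y ^ i * (x - y)) by (simpl; ring).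
    rewrite S_INR. eapply Rle_trans; [apply Rabs_triang|]. rewrite !Rabs_mult.
    assert (Hyi : 0 <= y ^ i <= 1).
    { split; [apply pow_le; lra|]. rewrite <- (pow1 i). apply pow_incr; lra. }
    rewrite (Rabs_right x), (Rabs_right (y ^ i)) by lra.
    pose proof (Rabs_pos (x ^ i - y ^ i)). pose proof (Rabs_pos (x - y)). nra.
Qed.

Lemma fact_odd_lower i : (2 ^ i <= fact (2 * i + 1) /\ i * 2 ^ i <= fact (2 * i + 1))%nat.
Proof.
  induction i as [|i [IH1 IH2]]; [simpl; lia|].
  replace (2 * S i + 1)%nat with (S (S (2 * i + 1))) by lia.
  rewrite !fact_simpl, Nat.pow_succ_r'. nia.
Qed.

Lemma sin_coef_bound i : INR i * Rabs (sin_n i) <= (/ 2) ^ i.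
Proof.
  unfold sin_n, Rdiv. rewrite Rabs_mult, Rabs_inv, pow_1_abs, (Rabs_right (INR _))
    by (apply Rle_ge, pos_INR).
  destruct (fact_odd_lower i) as [_ H]. apply le_INR in H. rewrite mult_INR, pow_INR in H.
  replace (INR 2) with 2 in H by (simpl; ring).
  set (F := INR (fact (2 * i + 1))) in *.
  assert (HF : 0 < F) by (apply lt_0_INR, lt_O_fact).
  assert (H2 : 0 < 2 ^ i) by (apply pow_lt; lra).
  rewrite pow_inv, Rmult_1_l. apply Rmult_le_reg_r with (F * 2 ^ i); [nra|].
  replace (INR i * / F * (F * 2 ^ i)) with (INR i * 2 ^ i) by (field; lra).
  replace (/ 2 ^ i * (F * 2 ^ i)) with F by (field; lra). lra.
Qed.

Lemma versc_coef_bound i : INR i * Rabs (versc_coef i) <= (/ 2) ^ i.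
Proof.
  eapply Rle_trans; [|apply sin_coef_bound]. apply Rmult_le_compat_l; [apply pos_INR|].
  unfold versc_coef, sin_n, Rdiv.
  rewrite !Rabs_mult, !Rabs_inv, !pow_1_abs, !(Rabs_right (INR _)) by (apply Rle_ge, pos_INR).
  assert (HF : 0 < INR (fact (2 * i + 1))) by (apply lt_0_INR, lt_O_fact).
  assert (HF2 : INR (fact (2 * i + 1)) <= INR (fact (2 * i + 2))).
  { apply le_INR. replace (2 * i + 2)%nat with (S (2 * i + 1)) by lia. rewrite fact_simpl. nia. }
  rewrite !Rmult_1_l. apply Rinv_le_contravar; lra.
Qed.

Lemma power_partial_lipschitz (c : nat -> R) : (forall i, INR i * Rabs (c i) <= (/ 2) ^ i) ->
  forall n x y, 0 <= x <= 1 -> 0 <= y <= 1 ->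
  Rabs (sum_f_R0 (fun i => c i * x ^ i) n - sum_f_R0 (fun i => c i * y ^ i) n)
    <= (1 - (/2) ^ n) * Rabs (x - y).
Proof.
  intros Hc n x y Hx Hy. induction n as [|n IH].
  - simpl. rewrite Rminus_diag, Rabs_R0. lra.
  - rewrite !tech5.
    set (Sx := sum_f_R0 (fun i => c i * x ^ i) n) in *. set (Sy := sum_f_R0 (fun i => c i * y ^ i) n) in *.
    replace (Sx + c (S n) * x ^ S n - (Sy + c (S n) * y ^ S n))
      with ((Sx - Sy) + c (S n) * (x ^ S n - y ^ S n)) by ring.
    eapply Rle_trans; [apply Rabs_triang|]. rewrite Rabs_mult.
    pose proof (pow_lipschitz_unit (S n) x y Hx Hy). pose proof (Hc (S n)).
    pose proof (Rabs_pos (c (S n))). pose proof (Rabs_pos (x - y)).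
    assert (Rabs (c (S n)) * Rabs (x ^ S n - y ^ S n) <= (/ 2) ^ S n * Rabs (x - y)).
    { eapply Rle_trans; [apply Rmult_le_compat_l; [lra|eauto]|]. nra. }
    simpl pow in *. lra.
Qed.

Lemma power_series_lipschitz (c : nat -> R) f : (forall i, INR i * Rabs (c i) <= (/ 2) ^ i) ->
  (forall x, Un_cv (fun n => sum_f_R0 (fun i => c i * x ^ i) n) (f x)) ->
  forall x y, 0 <= x <= 1 -> 0 <= y <= 1 -> Rabs (f x - f y) <= Rabs (x - y).
Proof.
  intros Hc Hf x y Hx Hy.
  apply (Rle_cv_lim (Un := fun n => Rabs (sum_f_R0 (fun i => c i * x ^ i) n
                                           - sum_f_R0 (fun i => c i * y ^ i) n))
                    (Vn := fun _ => Rabs (x - y))).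
  - intros n. eapply Rle_trans; [apply power_partial_lipschitz; auto|].
    assert (0 < (/2) ^ n) by (apply pow_lt; lra). pose proof (Rabs_pos (x - y)). nra.
  - apply cv_cvabs, CV_minus; apply Hf.
  - apply Un_cv_const.
Qed.

Lemma sinc_sqrt_lipschitz x y : 0 <= x <= 1 -> 0 <= y <= 1 ->
  Rabs (sinc_sqrt x - sinc_sqrt y) <= Rabs (x - y).
Proof. apply (power_series_lipschitz sin_n); [apply sin_coef_bound|apply sinc_sqrt_cv]. Qed.

Lemma versc_sqrt_lipschitz x y : 0 <= x <= 1 -> 0 <= y <= 1 ->
  Rabs (versc_sqrt x - versc_sqrt y) <= Rabs (x - y).
Proof. apply (power_series_lipschitz versc_coef); [apply versc_coef_bound|apply versc_sqrt_cv]. Qed.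

Lemma sinc_sqrt_near1 x : 0 <= x <= 1 -> Rabs (sinc_sqrt x - 1) <= x.
Proof.
  intros H. rewrite <- sinc_sqrt0. eapply Rle_trans; [apply sinc_sqrt_lipschitz; lra|].
  rewrite Rminus_0_r, Rabs_right; lra.
Qed.

Lemma versc_sqrt_near_half x : 0 <= x <= 1 -> Rabs (versc_sqrt x - / 2) <= x.
Proof.
  intros H. rewrite <- versc_sqrt0. eapply Rle_trans; [apply versc_sqrt_lipschitz; lra|].
  rewrite Rminus_0_r, Rabs_right; lra.
Qed.

Lemma Rabs_mul_sub a b a' b' :
  Rabs (a * b - a' * b') <= Rabs (a - a') * Rabs b + Rabs a' * Rabs (b - b').
Proof.
  replace (a * b - a' * b') with ((a - a') * b + a' * (b - b')) by ring.
  rewrite <- !Rabs_mult. apply Rabs_triang.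
Qed.

Lemma Rabs_sum3_le (f : I3 -> R) c : (forall k, Rabs (f k) <= c) -> Rabs (sum3 f) <= 3 * c.
Proof.
  intros H. unfold sum3. pose proof (H I0); pose proof (H I1); pose proof (H I2).
  pose proof (Rabs_triang (f I0 + f I1) (f I2)). pose proof (Rabs_triang (f I0) (f I1)). lra.
Qed.

Lemma Rabs_sum3_sub_le (f g : I3 -> R) c : (forall k, Rabs (f k - g k) <= c) ->
  Rabs (sum3 f - sum3 g) <= 3 * c.
Proof.
  intros H. replace (sum3 f - sum3 g) with (sum3 (fun k => f k - g k)) by (unfold sum3; ring).
  apply Rabs_sum3_le, H.
Qed.

Lemma Rabs_le_sqr x B : Rabs x <= B -> x * x <= B * B.
Proof. intros H. unfold Rabs in H. destruct Rcase_abs in H; nra. Qed.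

Lemma skew_bound v r : (forall k, Rabs (v k) <= r) -> forall i j, Rabs (skew v i j) <= r.
Proof.
  intros H i j. assert (0 <= r) by (pose proof (H I0); pose proof (Rabs_pos (v I0)); lra).
  destruct i, j; simpl; rewrite ?Rabs_Ropp, ?Rabs_R0; auto.
Qed.

Lemma skew_vsub v v' i j : skew v i j - skew v' i j = skew (vsub v v') i j.
Proof. unfold vsub; destruct i, j; simpl; ring. Qed.

Lemma mscale_skew c x : mscale c (skew x) = skew (vscale c x).
Proof.
  apply functional_extensionality; intro i; apply functional_extensionality; intro j.
  unfold mscale, skew, vscale. destruct i, j; ring.
Qed.

Lemma mmul_bound A B r s : (forall i j, Rabs (A i j) <= r) -> (forall i j, Rabs (B i j) <= s) ->
  forall i j, Rabs (mmul A B i j) <= 3 * (r * s).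
Proof.
  intros HA HB i j. apply Rabs_sum3_le. intros k.
  rewrite Rabs_mult. apply Rmult_le_compat; auto; apply Rabs_pos.
Qed.

Lemma mmul_sub_bound A B A' B' r s d e :
  (forall i j, Rabs (B i j) <= s) -> (forall i j, Rabs (A' i j) <= r) ->
  (forall i j, Rabs (A i j - A' i j) <= d) -> (forall i j, Rabs (B i j - B' i j) <= e) ->
  forall i j, Rabs (mmul A B i j - mmul A' B' i j) <= 3 * (d * s + r * e).
Proof.
  intros HB HA' Hd He i j. apply Rabs_sum3_sub_le. intros k.
  eapply Rle_trans; [apply Rabs_mul_sub|].
  apply Rplus_le_compat; apply Rmult_le_compat; auto; apply Rabs_pos.
Qed.

Lemma mvmul_inv3 (A : Mat) (v : Vec) : det3 A <> 0 -> forall i, mvmul A (mvmul (inv3 A) v) i = v i.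
Proof.
  intros Hd i. unfold inv3. unfold det3, cof, mvmul, sum3 in *. simpl in *.
  destruct i; simpl; field; auto.
Qed.

Lemma vdot_self_small v : (forall k, Rabs (v k) <= / 2) -> 0 <= vdot v v <= 1.
Proof.
  intros H. split; [apply vdot_self_ge0|]. unfold vdot, sum3.
  pose proof (Rabs_le_sqr _ _ (H I0)); pose proof (Rabs_le_sqr _ _ (H I1));
    pose proof (Rabs_le_sqr _ _ (H I2)). lra.
Qed.

Lemma vdot_self_sub v v' d : (forall k, Rabs (v k) <= / 2) -> (forall k, Rabs (v' k) <= / 2) ->
  (forall k, Rabs (v k - v' k) <= d) -> Rabs (vdot v v - vdot v' v') <= 3 * d.
Proof.
  intros H H' Hd. apply Rabs_sum3_sub_le. intros k.
  eapply Rle_trans; [apply Rabs_mul_sub|].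
  pose proof (H k); pose proof (H' k); pose proof (Hd k).
  pose proof (Rabs_pos (v k)); pose proof (Rabs_pos (v' k)); pose proof (Rabs_pos (v k - v' k)). nra.
Qed.

Lemma rodrigues_lipschitz v v' d : (forall k, Rabs (v k) <= / 2) -> (forall k, Rabs (v' k) <= / 2) ->
  (forall k, Rabs (v k - v' k) <= d) -> forall i j, Rabs (rodrigues v i j - rodrigues v' i j) <= 12 * d.
Proof.
  intros H H' Hd i j.
  assert (Hd0 : 0 <= d) by (pose proof (Hd I0); pose proof (Rabs_pos (v I0 - v' I0)); lra).
  pose proof (vdot_self_small v H) as Hx. pose proof (vdot_self_small v' H') as Hx'.
  pose proof (vdot_self_sub v v' d H H' Hd) as Hxd.
  set (x := vdot v v) in *. set (x' := vdot v' v') in *.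
  assert (Ha : Rabs (sinc_sqrt x - sinc_sqrt x') <= 3 * d)
    by (eapply Rle_trans; [apply sinc_sqrt_lipschitz; lra|exact Hxd]).
  assert (Hb : Rabs (versc_sqrt x - versc_sqrt x') <= 3 * d)
    by (eapply Rle_trans; [apply versc_sqrt_lipschitz; lra|exact Hxd]).
  assert (Ha' : Rabs (sinc_sqrt x') <= 2).
  { pose proof (sinc_sqrt_near1 x' Hx'). pose proof (Rabs_triang_inv (sinc_sqrt x') 1).
    rewrite Rabs_R1 in *. lra. }
  assert (Hb' : Rabs (versc_sqrt x') <= 2).
  { pose proof (versc_sqrt_near_half x' Hx'). pose proof (Rabs_triang_inv (versc_sqrt x') (/2)).
    rewrite (Rabs_right (/2)) in * by lra. lra. }
  assert (HK : Rabs (skew v i j) <= / 2) by (apply skew_bound; auto).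
  assert (HKd : Rabs (skew v i j - skew v' i j) <= d).
  { rewrite skew_vsub. apply skew_bound. intros; apply Hd. }
  assert (HK2 : Rabs (mmul (skew v) (skew v) i j) <= 3 * (/2 * /2))
    by (apply mmul_bound; intros; apply skew_bound; auto).
  assert (HK2d : Rabs (mmul (skew v) (skew v) i j - mmul (skew v') (skew v') i j)
                 <= 3 * (d * /2 + /2 * d)).
  { apply mmul_sub_bound; intros;
      first [apply skew_bound; auto | rewrite skew_vsub; apply skew_bound; intros; apply Hd]. }
  replace (rodrigues v i j - rodrigues v' i j) with
    ((sinc_sqrt x * skew v i j - sinc_sqrt x' * skew v' i j)
     + (versc_sqrt x * mmul (skew v) (skew v) i j - versc_sqrt x' * mmul (skew v') (skew v') i j))
    by (unfold rodrigues, madd, mscale; fold x x'; ring).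
  eapply Rle_trans; [apply Rabs_triang|].
  pose proof (Rabs_mul_sub (sinc_sqrt x) (skew v i j) (sinc_sqrt x') (skew v' i j)).
  pose proof (Rabs_mul_sub (versc_sqrt x) (mmul (skew v) (skew v) i j)
                (versc_sqrt x') (mmul (skew v') (skew v') i j)).
  assert (Rabs (sinc_sqrt x - sinc_sqrt x') * Rabs (skew v i j) <= 3 * d * / 2)
    by (apply Rmult_le_compat; auto using Rabs_pos).
  assert (Rabs (sinc_sqrt x') * Rabs (skew v i j - skew v' i j) <= 2 * d)
    by (apply Rmult_le_compat; auto using Rabs_pos).
  assert (Rabs (versc_sqrt x - versc_sqrt x') * Rabs (mmul (skew v) (skew v) i j) <= 3 * d * (3 * (/2 * /2)))
    by (apply Rmult_le_compat; auto using Rabs_pos).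
  assert (Rabs (versc_sqrt x') * Rabs (mmul (skew v) (skew v) i j - mmul (skew v') (skew v') i j)
          <= 2 * (3 * (d * /2 + /2 * d)))
    by (apply Rmult_le_compat; auto using Rabs_pos).
  lra.
Qed.

Lemma rodrigues_mvmul_bound x V B : 0 <= B -> (forall k, Rabs (V k) <= B) ->
  forall k, Rabs (mvmul (rodrigues x) V k) <= 2 * B.
Proof.
  intros HB HV k. pose proof (rodrigues_isometry x V) as HO.
  set (y := mvmul (rodrigues x) V) in *.
  assert (Hy : y k * y k <= vdot y y) by (unfold vdot, sum3; destruct k; nra).
  assert (HVV : vdot V V <= 3 * (B * B)).
  { unfold vdot, sum3. pose proof (Rabs_le_sqr _ _ (HV I0));
      pose proof (Rabs_le_sqr _ _ (HV I1)); pose proof (Rabs_le_sqr _ _ (HV I2)). lra. }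
  rewrite <- (Rabs_right (2 * B)) by lra. apply Rsqr_le_abs_0. unfold Rsqr. nra.
Qed.

Lemma rodrigues_mvmul_lipschitz x x' V B d : 0 <= B -> (forall k, Rabs (V k) <= B) ->
  (forall k, Rabs (x k) <= / 2) -> (forall k, Rabs (x' k) <= / 2) ->
  (forall k, Rabs (x k - x' k) <= d) ->
  forall k, Rabs (mvmul (rodrigues x) V k - mvmul (rodrigues x') V k) <= 36 * d * B.
Proof.
  intros HB HV Hx Hx' Hd k. pose proof (rodrigues_lipschitz x x' d Hx Hx' Hd) as HL.
  replace (36 * d * B) with (3 * (12 * d * B)) by ring.
  apply Rabs_sum3_sub_le. intros j.
  rewrite <- Rmult_minus_distr_r, Rabs_mult. apply Rmult_le_compat; auto using Rabs_pos.
Qed.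

(** * The implicit half step *)

Definition half_arg (h : R) (O w : Vec) : Vec := vscale (- (h / 2)) (vsub O w).
Definition vdist (u v : Vec) : R := vnorm (vsub u v).

Lemma vdist_ge u v k : Rabs (u k - v k) <= vdist u v.
Proof.
  unfold vdist, vnorm, vsub, sum3.
  pose proof (Rabs_pos (u I0 - v I0)); pose proof (Rabs_pos (u I1 - v I1));
    pose proof (Rabs_pos (u I2 - v I2)).
  destruct k; lra.
Qed.

Lemma vdist_ge0 u v : 0 <= vdist u v.
Proof. pose proof (vdist_ge u v I0) as H. pose proof (Rabs_pos (u I0 - v I0)). lra. Qed.

Lemma vdist_le u v c : (forall k, Rabs (u k - v k) <= c) -> vdist u v <= 3 * c.
Proof.
  intros H. unfold vdist, vnorm, vsub, sum3. pose proof (H I0); pose proof (H I1); pose proof (H I2). lra.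
Qed.

Lemma half_arg_small h O w B Bw : 0 < h -> (forall k, Rabs (O k) <= B) ->
  (forall k, Rabs (w k) <= Bw) -> h * (B + Bw) <= 1 -> forall k, Rabs (half_arg h O w k) <= / 2.
Proof.
  intros Hh HO Hw Hs k. unfold half_arg, vscale, vsub.
  rewrite Rabs_mult, Rabs_Ropp, (Rabs_right (h/2)) by lra.
  assert (Rabs (O k - w k) <= B + Bw).
  { eapply Rle_trans; [apply Rabs_triang|]. rewrite Rabs_Ropp. pose proof (HO k); pose proof (Hw k). lra. }
  pose proof (Rabs_pos (O k - w k)). nra.
Qed.

Lemma half_arg_sub h O w w' k : 0 < h ->
  Rabs (half_arg h O w k - half_arg h O w' k) <= h / 2 * vdist w w'.
Proof.
  intros Hh. unfold half_arg, vscale, vsub.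
  replace (- (h / 2) * (O k - w k) - - (h / 2) * (O k - w' k)) with (h / 2 * (w k - w' k)) by ring.
  rewrite Rabs_mult, (Rabs_right (h/2)) by lra. apply Rmult_le_compat_l; [lra|apply vdist_ge].
Qed.

Section ImplicitStep.
Variables (m h B : R) (Om V : Vec).
Hypotheses (Hm : 0 < m) (Hh : 0 < h) (HB : 0 <= B)
  (HV : forall k, Rabs (V k) <= B) (HO : forall k, Rabs (Om k) <= B)
  (Hsmall : h * (B + 2 * B / m) <= 1) (Hcontr : 108 * h * B <= m).

(* [m w = exp (-h/2 (Om - w)^x) V] is the fixed-point equation of [implicit_map].  Since
   the exponential is a rotation, all its solutions lie in the ball of radius [2B/m]
   (in the max norm), on which the map contracts with rate [1/2]. *)
Definition implicit_map (w : Vec) : Vec := fun k => / m * mvmul (rodrigues (half_arg h Om w)) V k.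

Lemma implicit_map_bound w k : Rabs (implicit_map w k) <= 2 * B / m.
Proof.
  unfold implicit_map. rewrite Rabs_mult, Rabs_right by (apply Rle_ge, Rlt_le, Rinv_0_lt_compat; lra).
  pose proof (rodrigues_mvmul_bound (half_arg h Om w) V B HB HV k).
  replace (2 * B / m) with (/ m * (2 * B)) by (field; lra).
  apply Rmult_le_compat_l; [apply Rlt_le, Rinv_0_lt_compat; lra|auto].
Qed.

Lemma implicit_solution_bound w : (forall k, m * w k = mvmul (rodrigues (half_arg h Om w)) V k) ->
  forall k, Rabs (w k) <= 2 * B / m.
Proof.
  intros Hw k. pose proof (implicit_map_bound w k) as X. unfold implicit_map in X.
  rewrite <- Hw, <- Rmult_assoc, Rinv_l, Rmult_1_l in X by lra. exact X.
Qed.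

Lemma implicit_rhs_lipschitz w w' : (forall k, Rabs (w k) <= 2 * B / m) ->
  (forall k, Rabs (w' k) <= 2 * B / m) -> forall k,
  Rabs (mvmul (rodrigues (half_arg h Om w)) V k - mvmul (rodrigues (half_arg h Om w')) V k)
    <= 18 * h * B * vdist w w'.
Proof.
  intros Hw Hw' k.
  eapply Rle_trans; [apply (rodrigues_mvmul_lipschitz _ _ V B (h / 2 * vdist w w') HB HV)|].
  - apply (half_arg_small h Om w B (2 * B / m)); auto.
  - apply (half_arg_small h Om w' B (2 * B / m)); auto.
  - intros; apply half_arg_sub; auto.
  - apply Req_le. field.
Qed.

Lemma implicit_map_contraction w w' : (forall k, Rabs (w k) <= 2 * B / m) ->
  (forall k, Rabs (w' k) <= 2 * B / m) ->
  vdist (implicit_map w) (implicit_map w') <= / 2 * vdist w w'.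
Proof.
  intros Hw Hw'. pose proof (implicit_rhs_lipschitz w w' Hw Hw') as HL.
  pose proof (vdist_ge0 w w').
  eapply Rle_trans; [apply (vdist_le _ _ (/ m * (18 * h * B * vdist w w')))|].
  - intros k. unfold implicit_map. rewrite <- Rmult_minus_distr_l, Rabs_mult.
    rewrite Rabs_right by (apply Rle_ge, Rlt_le, Rinv_0_lt_compat; lra).
    apply Rmult_le_compat_l; [apply Rlt_le, Rinv_0_lt_compat; lra|auto].
  - replace (3 * (/ m * (18 * h * B * vdist w w'))) with (54 * h * B / m * vdist w w') by (field; lra).
    apply Rmult_le_compat_r; auto.
    apply (Rmult_le_reg_l m); [lra|]. replace (m * (54 * h * B / m)) with (54 * h * B) by (field; lra). lra.
Qed.

Lemma implicit_step_stable ws w1 rho : (forall k, Rabs (ws k) <= 2 * B / m) ->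
  (forall k, m * w1 k = mvmul (rodrigues (half_arg h Om w1)) V k) ->
  (forall k, Rabs (m * ws k - mvmul (rodrigues (half_arg h Om ws)) V k) <= rho) ->
  vdist w1 ws <= 6 * rho / m.
Proof.
  intros Hws Hw1 Hr.
  pose proof (implicit_rhs_lipschitz w1 ws (implicit_solution_bound w1 Hw1) Hws) as HL.
  assert (Hk : forall k, Rabs (m * (w1 k - ws k)) <= 18 * h * B * vdist w1 ws + rho).
  { intros k. replace (m * (w1 k - ws k)) with
      ((mvmul (rodrigues (half_arg h Om w1)) V k - mvmul (rodrigues (half_arg h Om ws)) V k)
       - (m * ws k - mvmul (rodrigues (half_arg h Om ws)) V k)) by (rewrite <- Hw1; ring).
    eapply Rle_trans; [apply Rabs_triang|]. rewrite Rabs_Ropp. pose proof (HL k); pose proof (Hr k). lra. }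
  assert (HE : m * vdist w1 ws <= 3 * (18 * h * B * vdist w1 ws + rho)).
  { replace (m * vdist w1 ws) with (vdist (vscale m w1) (vscale m ws))
      by (unfold vdist, vnorm, vsub, vscale, sum3; rewrite <- !Rmult_minus_distr_l, !Rabs_mult,
            (Rabs_right m) by lra; ring).
    apply vdist_le. intros k. unfold vscale. rewrite <- Rmult_minus_distr_l. apply Hk. }
  pose proof (vdist_ge0 w1 ws).
  apply (Rmult_le_reg_l (m / 2)); [lra|]. replace (m / 2 * (6 * rho / m)) with (3 * rho) by (field; lra).
  nra.
Qed.

Fixpoint implicit_iter (n : nat) : Vec :=
  match n with O => fun _ => 0 | S n => implicit_map (implicit_iter n) end.

Lemma implicit_iter_bound n k : Rabs (implicit_iter n k) <= 2 * B / m.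
Proof.
  destruct n as [|n]; simpl; [|apply implicit_map_bound].
  rewrite Rabs_R0. apply Rmult_le_pos; [lra|apply Rlt_le, Rinv_0_lt_compat; lra].
Qed.

Lemma implicit_iter_step n :
  vdist (implicit_iter (S n)) (implicit_iter n) <= (/ 2) ^ n * vdist (implicit_iter 1) (implicit_iter 0).
Proof.
  induction n as [|n IH]; [simpl; lra|].
  eapply Rle_trans; [apply (implicit_map_contraction (implicit_iter (S n)) (implicit_iter n));
    intros; apply implicit_iter_bound|].
  simpl pow. rewrite Rmult_assoc. apply Rmult_le_compat_l; lra.
Qed.

Lemma implicit_iter_dist q j k : Rabs (implicit_iter (q + j) k - implicit_iter q k)
  <= 2 * (/ 2) ^ q * vdist (implicit_iter 1) (implicit_iter 0).
Proof.
  pose proof (vdist_ge0 (implicit_iter 1) (implicit_iter 0)).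
  assert (0 <= (/2) ^ q) by (apply pow_le; lra).
  enough (Rabs (implicit_iter (q + j) k - implicit_iter q k)
          <= 2 * (/ 2) ^ q * (1 - (/ 2) ^ j) * vdist (implicit_iter 1) (implicit_iter 0)).
  { assert (0 <= (/2) ^ q * (/2) ^ j * vdist (implicit_iter 1) (implicit_iter 0))
      by (repeat apply Rmult_le_pos; auto; apply pow_le; lra).
    nra. }
  induction j as [|j IH].
  - rewrite Nat.add_0_r, Rminus_diag, Rabs_R0. simpl. lra.
  - rewrite Nat.add_succ_r.
    replace (implicit_iter (S (q + j)) k - implicit_iter q k) with
      ((implicit_iter (S (q + j)) k - implicit_iter (q + j) k)
       + (implicit_iter (q + j) k - implicit_iter q k))
      by ring.
    eapply Rle_trans; [apply Rabs_triang|].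
    pose proof (vdist_ge (implicit_iter (S (q + j))) (implicit_iter (q + j)) k).
    pose proof (implicit_iter_step (q + j)). rewrite pow_add in *. simpl pow.
    assert (0 <= (/2) ^ j) by (apply pow_le; lra). nra.
Qed.

Lemma implicit_iter_cauchy k : Cauchy_crit (fun n => implicit_iter n k).
Proof.
  intros eps He. pose proof (vdist_ge0 (implicit_iter 1) (implicit_iter 0)).
  set (g := vdist (implicit_iter 1) (implicit_iter 0)) in *.
  destruct (pow_lt_1_zero (/ 2) ltac:(rewrite Rabs_right; lra) (eps / (4 * g + 1))) as [N HN].
  { apply Rdiv_lt_0_compat; lra. }
  exists N. intros n p Hn Hp. specialize (HN N ltac:(lia)).
  rewrite Rabs_right in HN by (apply Rle_ge, pow_le; lra).
  unfold Rdist. replace n with (N + (n - N))%nat by lia. replace p with (N + (p - N))%nat by lia.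
  replace (implicit_iter (N + (n - N)) k - implicit_iter (N + (p - N)) k) with
    ((implicit_iter (N + (n - N)) k - implicit_iter N k)
     - (implicit_iter (N + (p - N)) k - implicit_iter N k))
    by ring.
  eapply Rle_lt_trans; [apply Rabs_triang|]. rewrite Rabs_Ropp.
  pose proof (implicit_iter_dist N (n - N) k) as Hn'. pose proof (implicit_iter_dist N (p - N) k) as Hp'.
  fold g in Hn', Hp'.
  assert (0 <= (/2) ^ N) by (apply pow_le; lra).
  assert (4 * g * (/ 2) ^ N < eps).
  { apply (Rmult_lt_compat_l (4 * g + 1)) in HN; [|lra].
    replace ((4 * g + 1) * (eps / (4 * g + 1))) with eps in HN by (field; lra). nra. }
  lra.
Qed.

Definition implicit_limit : Vec := fun k => proj1_sig (R_complete _ (implicit_iter_cauchy k)).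

Lemma implicit_limit_cv k : Un_cv (fun n => implicit_iter n k) (implicit_limit k).
Proof. unfold implicit_limit. destruct (R_complete _ (implicit_iter_cauchy k)). auto. Qed.

Lemma implicit_limit_bound k : Rabs (implicit_limit k) <= 2 * B / m.
Proof.
  apply (Rle_cv_lim (Un := fun n => Rabs (implicit_iter n k)) (Vn := fun _ => 2 * B / m)).
  - intros; apply implicit_iter_bound.
  - apply cv_cvabs, implicit_limit_cv.
  - apply Un_cv_const.
Qed.

Lemma implicit_step_solvable : exists w, forall k, m * w k = mvmul (rodrigues (half_arg h Om w)) V k.
Proof.
  exists implicit_limit. intros k.
  assert (Hc : Un_cv (fun n => implicit_map (implicit_iter n) k) (implicit_map implicit_limit k)).
  { intros eps He.
    destruct (implicit_limit_cv I0 (eps / 2) ltac:(lra)) as [N0 H0].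
    destruct (implicit_limit_cv I1 (eps / 2) ltac:(lra)) as [N1 H1].
    destruct (implicit_limit_cv I2 (eps / 2) ltac:(lra)) as [N2 H2].
    exists (N0 + N1 + N2)%nat. intros n Hn.
    specialize (H0 n ltac:(lia)). specialize (H1 n ltac:(lia)). specialize (H2 n ltac:(lia)).
    unfold Rdist in *. eapply Rle_lt_trans; [eapply Rle_trans; [apply vdist_ge|]|].
    - apply implicit_map_contraction; [intros; apply implicit_iter_bound|apply implicit_limit_bound].
    - unfold vdist, vnorm, vsub, sum3. lra. }
  assert (Hc2 : Un_cv (fun n => implicit_map (implicit_iter n) k) (implicit_limit k)).
  { apply (Un_cv_ext (fun n => implicit_iter (n + 1) k)).
    - intros n. rewrite Nat.add_1_r. reflexivity.
    - apply (CV_shift' (fun n => implicit_iter n k) 1). apply implicit_limit_cv. }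
  rewrite <- (UL_sequence _ _ _ Hc Hc2). unfold implicit_map. field. lra.
Qed.

End ImplicitStep.

(** * Expansions in the step size *)

Definition near0 (P : R -> Prop) : Prop := exists d, 0 < d /\ forall h, 0 < h < d -> P h.

Lemma near0_and (P Q : R -> Prop) : near0 P -> near0 Q -> near0 (fun h => P h /\ Q h).
Proof.
  intros [d1 [Hd1 H1]] [d2 [Hd2 H2]]. exists (Rmin d1 d2). split; [apply Rmin_pos; auto|].
  intros h Hh. pose proof (Rmin_l d1 d2); pose proof (Rmin_r d1 d2).
  split; [apply H1|apply H2]; lra.
Qed.

Lemma near0_mono (P Q : R -> Prop) : near0 P -> (forall h, 0 < h -> P h -> Q h) -> near0 Q.
Proof. intros [d [Hd H]] HPQ. exists d. split; auto. intros h Hh. apply HPQ; [lra|auto]. Qed.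

Lemma near0_lt e : 0 < e -> near0 (fun h => h < e).
Proof. intros He. exists e. split; auto. intros h Hh. lra. Qed.

Definition bigO (n : nat) (f : R -> R) : Prop :=
  exists C, near0 (fun h => Rabs (f h) <= C * h ^ n).

Lemma bigO_ge0 n f : bigO n f -> exists C, 0 <= C /\ near0 (fun h => Rabs (f h) <= C * h ^ n).
Proof.
  intros [C HC]. exists (Rabs C). split; [apply Rabs_pos|].
  apply (near0_mono _ _ HC). intros h Hh H. eapply Rle_trans; [exact H|].
  apply Rmult_le_compat_r; [apply pow_le; lra|apply Rle_abs].
Qed.

Lemma bigO_ext_near n f g : near0 (fun h => f h = g h) -> bigO n f -> bigO n g.
Proof.
  intros E [C HC]. exists C. apply (near0_mono _ _ (near0_and _ _ E HC)).
  intros h _ [-> H]. exact H.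
Qed.

Lemma bigO_ext n f g : (forall h, 0 < h -> f h = g h) -> bigO n f -> bigO n g.
Proof. intros E. apply bigO_ext_near. exists 1. split; [lra|]. intros h Hh. apply E. lra. Qed.

Lemma bigO_dominated n f g : bigO n g -> near0 (fun h => Rabs (f h) <= Rabs (g h)) -> bigO n f.
Proof.
  intros [C HC] Hfg. exists C. apply (near0_mono _ _ (near0_and _ _ HC Hfg)).
  intros h _ [H1 H2]. lra.
Qed.

Lemma bigO0 n : bigO n (fun _ => 0).
Proof. exists 0. exists 1. split; [lra|]. intros. rewrite Rabs_R0. lra. Qed.

Lemma bigO_const c : bigO 0 (fun _ => c).
Proof. exists (Rabs c). exists 1. split; [lra|]. intros. simpl. lra. Qed.

Lemma bigO_add n f g : bigO n f -> bigO n g -> bigO n (fun h => f h + g h).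
Proof.
  intros [C1 H1] [C2 H2]. exists (C1 + C2). apply (near0_mono _ _ (near0_and _ _ H1 H2)).
  intros h _ [B1 B2]. eapply Rle_trans; [apply Rabs_triang|]. lra.
Qed.

Lemma bigO_opp n f : bigO n f -> bigO n (fun h => - f h).
Proof. intros [C HC]. exists C. apply (near0_mono _ _ HC). intros h _ H. rewrite Rabs_Ropp. exact H. Qed.

Lemma bigO_sub n f g : bigO n f -> bigO n g -> bigO n (fun h => f h - g h).
Proof. intros. apply bigO_add; auto. apply bigO_opp; auto. Qed.

Lemma bigO_mul n m f g : bigO n f -> bigO m g -> bigO (n + m) (fun h => f h * g h).
Proof.
  intros [C1 H1] [C2 H2]. exists (C1 * C2). apply (near0_mono _ _ (near0_and _ _ H1 H2)).
  intros h _ [B1 B2]. rewrite Rabs_mult, pow_add.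
  replace (C1 * C2 * (h ^ n * h ^ m)) with ((C1 * h ^ n) * (C2 * h ^ m)) by ring.
  apply Rmult_le_compat; auto; apply Rabs_pos.
Qed.

Lemma pow_le_1 h n : 0 <= h <= 1 -> h ^ n <= 1.
Proof. intros Hh. rewrite <- (pow1 n). apply pow_incr. lra. Qed.

Lemma bigO_weaken m n f : (m <= n)%nat -> bigO n f -> bigO m f.
Proof.
  intros Hmn Hf. destruct (bigO_ge0 _ _ Hf) as [C [HC0 HC]]. exists C.
  apply (near0_mono _ _ (near0_and _ _ HC (near0_lt 1 ltac:(lra)))). intros h Hh [H H1].
  eapply Rle_trans; [exact H|]. apply Rmult_le_compat_l; auto.
  replace n with (m + (n - m))%nat by lia. rewrite pow_add.
  assert (0 < h ^ m) by (apply pow_lt; lra).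
  pose proof (pow_le_1 h (n - m) ltac:(lra)). assert (0 <= h ^ (n - m)) by (apply pow_le; lra). nra.
Qed.

Lemma bigO_pow n : bigO n (fun h => h ^ n).
Proof.
  exists 1. exists 1. split; [lra|]. intros h Hh.
  rewrite Rabs_right by (apply Rle_ge, pow_le; lra). lra.
Qed.

Lemma bigO_scale n c f : bigO n f -> bigO n (fun h => c * f h).
Proof. intros H. apply (bigO_mul 0 n); auto. apply bigO_const. Qed.

Lemma bigO_hmul n f : bigO n f -> bigO (S n) (fun h => h * f h).
Proof.
  intros H. apply (bigO_mul 1 n); auto.
  apply (bigO_ext 1 (fun h => h ^ 1)); [intros; ring|apply bigO_pow].
Qed.

Lemma bigO_abs n f : bigO n f -> bigO n (fun h => Rabs (f h)).
Proof. intros [C HC]. exists C. apply (near0_mono _ _ HC). intros h _ H. rewrite Rabs_Rabsolu. exact H. Qed.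

Lemma bigO_small n f : bigO (S n) f -> forall e, 0 < e -> near0 (fun h => Rabs (f h) <= e).
Proof.
  intros Hf e He. destruct (bigO_ge0 _ _ Hf) as [C [HC0 HC]].
  assert (He' : 0 < e / (C + 1)) by (apply Rdiv_lt_0_compat; lra).
  apply (near0_mono _ _ (near0_and _ _ HC (near0_and _ _ (near0_lt 1 ltac:(lra)) (near0_lt _ He')))).
  intros h Hh [H [H1 H2]]. eapply Rle_trans; [exact H|]. simpl.
  pose proof (pow_le_1 h n ltac:(lra)). assert (0 <= h ^ n) by (apply pow_le; lra).
  assert (h * (C + 1) < e).
  { apply (Rmult_lt_compat_r (C + 1)) in H2; [|lra].
    unfold Rdiv in H2. rewrite Rmult_assoc, Rinv_l in H2 by lra. lra. }
  nra.
Qed.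

Lemma bigO_cube_mul n (p : R -> R) : (n <= 3)%nat -> bigO 0 p -> bigO n (fun h => h * h * h * p h).
Proof.
  intros Hn Hp. apply (bigO_weaken n 3); auto.
  apply (bigO_ext 3 (fun h => h ^ 3 * p h)); [intros; simpl; ring|].
  apply (bigO_mul 3 0); auto. apply bigO_pow.
Qed.

Definition expands (n : nat) (f : R -> R) (a b c : R) : Prop :=
  bigO n (fun h => f h - (a + h * b + h * h * c)).

Definition vexpands n (v : R -> Vec) (a b c : Vec) : Prop :=
  forall i, expands n (fun h => v h i) (a i) (b i) (c i).
Definition mexpands n (A : R -> Mat) (a b c : Mat) : Prop :=
  forall i j, expands n (fun h => A h i j) (a i j) (b i j) (c i j).

Lemma expands_ext_near n f g a b c :
  near0 (fun h => f h = g h) -> expands n f a b c -> expands n g a b c.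
Proof.
  intros E. apply bigO_ext_near. apply (near0_mono _ _ E). intros h _ ->. reflexivity.
Qed.

Lemma expands_ext n f g a b c : (forall h, 0 < h -> f h = g h) -> expands n f a b c -> expands n g a b c.
Proof. intros E. apply bigO_ext. intros h Hh. rewrite E; auto. Qed.

Lemma expands_coef n f a b c a' b' c' :
  expands n f a b c -> a = a' -> b = b' -> c = c' -> expands n f a' b' c'.
Proof. intros H -> -> ->. exact H. Qed.

Lemma expands_weaken m n f a b c : (m <= n)%nat -> expands n f a b c -> expands m f a b c.
Proof. apply bigO_weaken. Qed.

Lemma expands_poly n a b c : expands n (fun h => a + h * b + h * h * c) a b c.
Proof. unfold expands. eapply bigO_ext; [|apply bigO0]. intros; simpl; ring. Qed.

Lemma expands_const n c : expands n (fun _ => c) c 0 0.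
Proof. unfold expands. eapply bigO_ext; [|apply bigO0]. intros; simpl; ring. Qed.

Lemma expands_id n : expands n (fun h => h) 0 1 0.
Proof. unfold expands. eapply bigO_ext; [|apply bigO0]. intros; simpl; ring. Qed.

Lemma expands_add n f g a b c a' b' c' : expands n f a b c -> expands n g a' b' c' ->
  expands n (fun h => f h + g h) (a + a') (b + b') (c + c').
Proof. intros H1 H2. eapply bigO_ext; [|apply (bigO_add _ _ _ H1 H2)]. intros; simpl; ring. Qed.

Lemma expands_opp n f a b c : expands n f a b c -> expands n (fun h => - f h) (- a) (- b) (- c).
Proof. intros H. eapply bigO_ext; [|apply (bigO_opp _ _ H)]. intros; simpl; ring. Qed.

Lemma expands_sub n f g a b c a' b' c' : expands n f a b c -> expands n g a' b' c' ->
  expands n (fun h => f h - g h) (a - a') (b - b') (c - c').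
Proof. intros H1 H2. eapply bigO_ext; [|apply (bigO_sub _ _ _ H1 H2)]. intros; simpl; ring. Qed.

Lemma bigO1_poly b c : bigO 1 (fun h => h * b + h * h * c).
Proof.
  apply (bigO_ext 1 (fun h => b * h ^ 1 + h * (c * h ^ 1))); [intros; simpl; ring|].
  apply bigO_add; [apply bigO_scale, bigO_pow|].
  apply bigO_hmul, (bigO_weaken 0 1); [lia|apply bigO_scale, bigO_pow].
Qed.

Lemma expands_bigO0 n f a b c : expands n f a b c -> bigO 0 f.
Proof.
  intros H. apply (bigO_weaken 0 n) in H; [|lia].
  apply (bigO_ext 0 (fun h => (f h - (a + h * b + h * h * c)) + (a + (h * b + h * h * c))));
    [intros; ring|].
  apply bigO_add; auto. apply (bigO_add 0); [apply bigO_const|].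
  apply (bigO_weaken 0 1); [lia|apply bigO1_poly].
Qed.

Lemma expands0_of_bigO0 f a b c : bigO 0 f -> expands 0 f a b c.
Proof. intros H. apply bigO_sub; auto. apply (expands_bigO0 0 _ a b c), expands_poly. Qed.

Lemma vexpands_bigO1 n v b c : (1 <= n)%nat -> vexpands n v (fun _ => 0) b c ->
  forall i, bigO 1 (fun h => v h i).
Proof.
  intros Hn H i.
  apply (bigO_ext 1 (fun h => (v h i - (0 + h * b i + h * h * c i)) + (h * b i + h * h * c i)));
    [intros; ring|].
  apply bigO_add; [apply (bigO_weaken 1 n); [exact Hn|apply H]|apply bigO1_poly].
Qed.

Lemma expands_mul n f g a b c a' b' c' : (n <= 3)%nat -> expands n f a b c -> expands n g a' b' c' ->
  expands n (fun h => f h * g h) (a * a') (a * b' + b * a') (a * c' + b * b' + c * a').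
Proof.
  intros Hn H1 H2. unfold expands.
  apply (bigO_ext n (fun h => f h * (g h - (a' + h * b' + h * h * c'))
      + (f h - (a + h * b + h * h * c)) * (a' + h * b' + h * h * c')
      + h * h * h * (b * c' + c * b' + h * c * c'))); [intros; ring|].
  apply bigO_add; [apply bigO_add|].
  - apply (bigO_mul 0 n); auto. eapply expands_bigO0; eauto.
  - replace n with (n + 0)%nat by lia. apply bigO_mul; auto.
    apply (expands_bigO0 0 _ a' b' c'), expands_poly.
  - apply bigO_cube_mul; auto. apply (bigO_add 0); [apply bigO_const|].
    apply (bigO_weaken 0 1); [lia|].
    apply (bigO_ext 1 (fun h => (c * c') * h ^ 1)); [intros; simpl; ring|].
    apply bigO_scale, bigO_pow.
Qed.

Lemma expands_scale n k f a b c : (n <= 3)%nat -> expands n f a b c ->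
  expands n (fun h => k * f h) (k * a) (k * b) (k * c).
Proof.
  intros Hn H. eapply expands_coef; [apply (expands_mul n _ f _ 0 0 a b c Hn (expands_const n k) H)|..];
    ring.
Qed.

Lemma expands_hmul n f a b c : (n <= 2)%nat -> expands n f a b c -> expands (S n) (fun h => h * f h) 0 a b.
Proof.
  intros Hn H. unfold expands in *.
  apply (bigO_ext (S n) (fun h => h * (f h - (a + h * b + h * h * c)) + h * h * h * c)); [intros; ring|].
  apply bigO_add; [apply bigO_hmul; auto|]. apply bigO_cube_mul; [lia|apply bigO_const].
Qed.

Lemma expands_unique n f g a b c : expands n f a b c -> expands n g a b c -> bigO n (fun h => f h - g h).
Proof. intros H1 H2. eapply bigO_ext; [|apply (bigO_sub _ _ _ H1 H2)]. intros; simpl; ring. Qed.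

(* Only the coefficients up to order [h] carry information when [n <= 2]. *)
Lemma expands_drop2 n f a b c : (n <= 2)%nat -> expands n f a b c -> expands n f a b 0.
Proof.
  intros Hn H. unfold expands in *.
  apply (bigO_ext n (fun h => (f h - (a + h * b + h * h * c)) + c * h ^ 2)); [intros; simpl; ring|].
  apply bigO_add; auto. apply (bigO_weaken n 2); auto. apply bigO_scale, bigO_pow.
Qed.

Lemma vexpands_drop2 n v a b c : (n <= 2)%nat -> vexpands n v a b c -> vexpands n v a b (fun _ => 0).
Proof. intros Hn H i. eapply expands_drop2; eauto. Qed.

Lemma mexpands_drop2 n A a b c : (n <= 2)%nat -> mexpands n A a b c -> mexpands n A a b (fun _ _ => 0).
Proof. intros Hn H i j. eapply expands_drop2; eauto. Qed.

Ltac expand_rec :=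
  match goal with
  | |- expands _ (fun _ => ?c) _ _ _ => apply expands_const
  | |- expands _ (fun h => h) _ _ _ => apply expands_id
  | H : vexpands ?n ?v _ _ _ |- expands ?m (fun h => ?v h ?i) _ _ _ =>
      first [apply H | eapply expands_weaken; [|apply H]; lia]
  | H : mexpands ?n ?v _ _ _ |- expands ?m (fun h => ?v h ?i ?j) _ _ _ =>
      first [apply H | eapply expands_weaken; [|apply H]; lia]
  | H : expands ?n ?f _ _ _ |- expands ?m ?f _ _ _ =>
      first [apply H | eapply expands_weaken; [|apply H]; lia]
  | |- expands _ (fun h => _ + _) _ _ _ => apply expands_add; expand_rec
  | |- expands _ (fun h => _ - _) _ _ _ => apply expands_sub; expand_rec
  | |- expands _ (fun h => - _) _ _ _ => apply expands_opp; expand_rec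
  | |- expands _ (fun h => _ * _) _ _ _ => apply expands_mul; [lia|expand_rec|expand_rec]
  end.

Ltac unfold_linalg :=
  unfold U0, Lmat, SL, frob, trace, vex, cross, vdot, mvmul, mmul, madd, msub, mscale, mtr,
    vadd, vsub, vscale, skew, sum3, vec3, mid, Rdiv.

Ltac expand_solve :=
  unfold_linalg; simpl; eapply expands_coef; [expand_rec| | | ]; try reflexivity;
  try (unfold_linalg; simpl; ring); try (unfold_linalg; simpl; field; lra).

Lemma derivable_lim_continuous (f g : R -> R) :
  (forall x, derivable_pt_lim f x (g x)) -> forall x, continuity_pt f x.
Proof. intros Hf x. apply derivable_continuous_pt. exists (g x). apply Hf. Qed.

Lemma continuous_bounded (k : R -> R) : (forall x, continuity_pt k x) ->
  forall a b, exists M, forall x, a <= x <= b -> Rabs (k x) <= M.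
Proof.
  intros Hk a b. destruct (Rle_or_lt a b) as [Hab|Hab].
  - destruct (continuity_ab_maj (fun x => Rabs (k x)) a b Hab) as [Mx [HM _]].
    { intros c _. apply continuity_pt_comp with (f1 := k) (f2 := Rabs); [apply Hk|apply Rcontinuity_abs]. }
    exists (Rabs (k Mx)). auto.
  - exists 0. intros; lra.
Qed.

Lemma mvt_bound (f g : R -> R) x y M : x < y ->
  (forall t, x <= t <= y -> derivable_pt_lim f t (g t)) -> (forall t, x < t < y -> Rabs (g t) <= M) ->
  Rabs (f y - f x) <= M * (y - x).
Proof.
  intros Hxy Hf Hg. destruct (MVT_cor2 f g x y Hxy Hf) as [c [Hc1 Hc2]].
  rewrite Hc1, Rabs_mult, (Rabs_right (y - x)) by lra.
  apply Rmult_le_compat_r; [lra|]. apply Hg. lra.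
Qed.

Lemma derivative_bound_lipschitz (f g : R -> R) a b M : (forall x, derivable_pt_lim f x (g x)) ->
  (forall x, a <= x <= b -> Rabs (g x) <= M) ->
  forall x y, a <= x <= b -> a <= y <= b -> Rabs (f x - f y) <= M * Rabs (x - y).
Proof.
  intros Hf Hg x y Hx Hy. destruct (Rtotal_order x y) as [H|[H|H]].
  - rewrite <- Rabs_Ropp, Ropp_minus_distr, <- (Rabs_Ropp (x - y)), Ropp_minus_distr.
    rewrite (Rabs_right (y - x)) by lra.
    apply (mvt_bound f g); auto. intros t Ht. apply Hg. lra.
  - subst. rewrite !Rminus_diag, Rabs_R0. pose proof (Rabs_pos (g y)). pose proof (Hg y Hy). nra.
  - rewrite (Rabs_right (x - y)) by lra. apply (mvt_bound f g); auto. intros t Ht. apply Hg. lra.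
Qed.

Lemma taylor1_remainder (f g k : R -> R) a b M : (forall x, derivable_pt_lim f x (g x)) ->
  (forall x, derivable_pt_lim g x (k x)) -> (forall x, a <= x <= b -> Rabs (k x) <= M) ->
  forall x y, a <= x <= b -> a <= y <= b -> Rabs (f y - f x - g x * (y - x)) <= M * (y - x) ^ 2.
Proof.
  intros Hf Hg Hk.
  assert (Hl := derivative_bound_lipschitz g k a b M Hg Hk).
  assert (Hmain : forall x y c, a <= x <= b -> a <= y <= b -> Rmin x y <= c <= Rmax x y ->
     f y - f x = g c * (y - x) -> Rabs (f y - f x - g x * (y - x)) <= M * (y - x) ^ 2).
  { intros x y c Hx Hy Hc E. rewrite E.
    replace (g c * (y - x) - g x * (y - x)) with ((g c - g x) * (y - x)) by ring.
    rewrite Rabs_mult. assert (Hca : a <= c <= b).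
    { split; [eapply Rle_trans; [|apply Hc]; apply Rmin_glb; lra
             |eapply Rle_trans; [apply Hc|]; apply Rmax_lub; lra]. }
    assert (H1 := Hl c x Hca Hx). assert (Rabs (c - x) <= Rabs (y - x)).
    { unfold Rmin, Rmax in Hc.
      destruct (Rle_dec x y); unfold Rabs; destruct Rcase_abs; destruct Rcase_abs; lra. }
    assert (0 <= M) by (pose proof (Rabs_pos (k x)); pose proof (Hk x Hx); lra).
    rewrite <- (Rabs_right ((y - x) ^ 2)) by (apply Rle_ge, pow2_ge_0). rewrite <- RPow_abs.
    pose proof (Rabs_pos (y - x)). pose proof (Rabs_pos (g c - g x)). simpl. rewrite Rmult_1_r.
    apply Rle_trans with (M * Rabs (c - x) * Rabs (y - x)); [apply Rmult_le_compat_r; auto|].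
    rewrite <- Rmult_assoc. apply Rmult_le_compat_r; auto. apply Rmult_le_compat_l; auto. }
  intros x y Hx Hy. destruct (Rtotal_order x y) as [H|[H|H]].
  - destruct (MVT_cor2 f g x y H) as [c [Hc1 Hc2]]; [intros; apply Hf|].
    apply (Hmain x y c); auto. rewrite Rmin_left, Rmax_right; lra.
  - subst. replace (f y - f y - g y * (y - y)) with 0 by ring. rewrite Rabs_R0.
    assert (0 <= M) by (pose proof (Rabs_pos (k y)); pose proof (Hk y Hx); lra). simpl. nra.
  - destruct (MVT_cor2 f g y x H) as [c [Hc1 Hc2]]; [intros; apply Hf|].
    apply (Hmain x y c); auto; [rewrite Rmin_right, Rmax_left; lra|].
    replace (f y - f x) with (- (f x - f y)) by ring. rewrite Hc1. ring.
Qed.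

Lemma expands_comp (f g k : R -> R) n y a b c : (forall x, derivable_pt_lim f x (g x)) ->
  (forall x, derivable_pt_lim g x (k x)) -> (forall x, continuity_pt k x) -> (n <= 2)%nat ->
  expands n y a b c -> expands n (fun h => f (y h)) (f a) (g a * b) (g a * c).
Proof.
  intros Hf Hg Hk Hn Hy. destruct n as [|n].
  - apply expands0_of_bigO0. destruct (expands_bigO0 _ _ _ _ _ Hy) as [B HB].
    destruct (continuous_bounded f (derivable_lim_continuous _ _ Hf) (-B) B) as [M HM].
    exists M. apply (near0_mono _ _ HB). intros h _ H. simpl in *. rewrite Rmult_1_r in *.
    apply HM. unfold Rabs in H. destruct Rcase_abs in H; lra.
  - assert (Hya : bigO 1 (fun h => y h - a)).
    { apply (bigO_ext 1 (fun h => (y h - (a + h * b + h * h * c)) + (h * b + h * h * c))); [intros; ring|].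
      apply bigO_add; [apply (bigO_weaken 1 (S n)); [lia|exact Hy]|apply bigO1_poly]. }
    destruct (continuous_bounded k Hk (a - 1) (a + 1)) as [M HM].
    assert (HT : bigO 2 (fun h => f (y h) - f a - g a * (y h - a))).
    { apply bigO_dominated with (fun h => M * ((y h - a) * (y h - a))).
      - apply bigO_scale. apply (bigO_mul 1 1); auto.
      - apply (near0_mono _ _ (bigO_small 0 _ Hya 1 ltac:(lra))). intros h _ H1.
        assert (Iy : a - 1 <= y h <= a + 1) by (unfold Rabs in H1; destruct Rcase_abs in H1; lra).
        eapply Rle_trans; [apply (taylor1_remainder f g k (a-1) (a+1) M Hf Hg HM); lra|].
        eapply Rle_trans; [|apply Rle_abs]. right. ring. }
    apply (bigO_ext (S n) (fun h => (f (y h) - f a - g a * (y h - a))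
                                   + g a * (y h - (a + h * b + h * h * c)))); [intros; ring|].
    apply bigO_add; [apply (bigO_weaken (S n) 2); [lia|exact HT]|apply bigO_scale; exact Hy].
Qed.

Lemma smooth_expands (f : R -> R) (F : nat -> R -> R) t0 : F O = f ->
  (forall n x, derivable_pt_lim (F n) x (F (S n) x)) ->
  expands 2 (fun h => f (t0 + h)) (f t0) (F 1%nat t0) 0.
Proof.
  intros HF0 HF. subst f.
  destruct (continuous_bounded (F 2%nat) (derivable_lim_continuous _ _ (HF 2%nat)) (t0 - 1) (t0 + 1))
    as [M HM].
  exists M. exists 1. split; [lra|]. intros h Hh.
  replace (F 0%nat (t0 + h) - (F 0%nat t0 + h * F 1%nat t0 + h * h * 0))
    with (F 0%nat (t0 + h) - F 0%nat t0 - F 1%nat t0 * (t0 + h - t0)) by ring.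
  replace (M * h ^ 2) with (M * (t0 + h - t0) ^ 2) by (f_equal; ring).
  apply (taylor1_remainder (F 0%nat) (F 1%nat) (F 2%nat) (t0 - 1) (t0 + 1) M (HF 0%nat) (HF 1%nat) HM); lra.
Qed.

Definition smooth_derivs (f : R -> R) (Hf : smooth f) : nat -> R -> R :=
  proj1_sig (constructive_indefinite_description _ Hf).

Lemma smooth_derivs0 f Hf : smooth_derivs f Hf 0%nat = f.
Proof. unfold smooth_derivs. destruct (constructive_indefinite_description _ Hf) as [F HF]. apply HF. Qed.

Lemma smooth_derivs_derivable f Hf n x :
  derivable_pt_lim (smooth_derivs f Hf n) x (smooth_derivs f Hf (S n) x).
Proof. unfold smooth_derivs. destruct (constructive_indefinite_description _ Hf) as [F HF]. apply HF. Qed.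

Lemma smooth_derivs_expands f Hf t0 :
  expands 2 (fun h => f (t0 + h)) (f t0) (smooth_derivs f Hf 1%nat t0) 0.
Proof. apply smooth_expands; [apply smooth_derivs0|apply smooth_derivs_derivable]. Qed.

Lemma derivable_bigO0 (f : R -> R) t0 l : derivable_pt_lim f t0 l -> bigO 0 (fun h => f (t0 + h)).
Proof.
  intros H. assert (Hc : continuity_pt f t0) by (apply derivable_continuous_pt; exists l; exact H).
  destruct (Hc 1 ltac:(lra)) as [d [Hd Hd2]]. exists (Rabs (f t0) + 1). exists d. split; [lra|].
  intros h Hh. simpl. rewrite Rmult_1_r. assert (Hx : dist R_met (f (t0 + h)) (f t0) < 1).
  { apply Hd2. split; [split; [constructor|lra]|].
    simpl. unfold Rdist. replace (t0 + h - t0) with h by ring. rewrite Rabs_right; lra. }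
  simpl in Hx. unfold Rdist in Hx. pose proof (Rabs_triang_inv (f (t0 + h)) (f t0)). lra.
Qed.

Section PolyDerivative.
Import Coquelicot.Coquelicot.
Lemma derivable_pt_lim_cubic (a b c t0 x : R) :
  derivable_pt_lim (fun t => a * (t - t0) + b / 2 * (t - t0) ^ 2 + c / 3 * (t - t0) ^ 3) x
    (a + b * (x - t0) + c * (x - t0) ^ 2).
Proof. apply is_derive_Reals. auto_derive; auto. simpl. field. Qed.
End PolyDerivative.

Lemma expands_integrate k (f g : R -> R) t0 d a b c : (k <= 2)%nat -> 0 < d ->
  (forall t, t0 <= t <= t0 + d -> derivable_pt_lim f t (g t)) ->
  expands k (fun h => g (t0 + h)) a b c -> expands (S k) (fun h => f (t0 + h)) (f t0) a (b / 2).
Proof.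
  intros Hk Hd Hf Hg. destruct (bigO_ge0 _ _ Hg) as [C [HC0 [dC [HdC HC]]]].
  exists (C + Rabs c).
  apply (near0_mono _ _ (near0_and _ _ (near0_lt dC HdC)
                           (near0_and _ _ (near0_lt d Hd) (near0_lt 1 ltac:(lra))))).
  intros h Hh [HhC [Hhd Hh1]].
  set (psi := fun t => f t - (a * (t - t0) + b / 2 * (t - t0) ^ 2 + c / 3 * (t - t0) ^ 3)).
  assert (Hpsi : Rabs (psi (t0 + h) - psi t0) <= C * h ^ k * (t0 + h - t0)).
  { apply (mvt_bound psi (fun t => g t - (a + b * (t - t0) + c * (t - t0) ^ 2))); [lra| |].
    - intros t Ht. apply derivable_pt_lim_minus; [apply Hf; lra|apply derivable_pt_lim_cubic].
    - intros t Ht. specialize (HC (t - t0) ltac:(lra)).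
      replace (t0 + (t - t0)) with t in HC by ring.
      eapply Rle_trans; [|apply Rmult_le_compat_l; [exact HC0|apply pow_incr with (x := t - t0); lra]].
      eapply Rle_trans; [|exact HC]. right. f_equal. ring. }
  replace (f (t0 + h) - (f t0 + h * a + h * h * (b / 2)))
    with ((psi (t0 + h) - psi t0) + c / 3 * h ^ 3)
    by (unfold psi; replace (t0 + h - t0) with h by ring; replace (t0 - t0) with 0 by ring; simpl; field).
  replace (t0 + h - t0) with h in Hpsi by ring.
  assert (Hh3 : h ^ 3 <= h ^ S k).
  { replace 3%nat with (S k + (2 - k))%nat by lia. rewrite pow_add.
    pose proof (pow_le_1 h (2 - k) ltac:(lra)).
    assert (0 <= h ^ S k) by (apply pow_le; lra). assert (0 <= h ^ (2 - k)) by (apply pow_le; lra). nra. }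
  eapply Rle_trans; [apply Rabs_triang|]. rewrite Rmult_plus_distr_r.
  apply Rplus_le_compat.
  - eapply Rle_trans; [exact Hpsi|]. right. simpl. ring.
  - rewrite Rabs_mult. unfold Rdiv. rewrite Rabs_mult, (Rabs_right (/3)) by lra.
    rewrite (Rabs_right (h ^ 3)) by (apply Rle_ge, pow_le; lra).
    pose proof (Rabs_pos c). assert (0 <= h ^ 3) by (apply pow_le; lra). nra.
Qed.

Lemma rodrigues_bigO3 (v : R -> Vec) : (forall i, bigO 1 (fun h => v h i)) ->
  forall i j, bigO 3 (fun h => rodrigues (v h) i j
    - (mid i j + skew (v h) i j + / 2 * mmul (skew (v h)) (skew (v h)) i j)).
Proof.
  intros Hv i j.
  assert (Hx : bigO 2 (fun h => vdot (v h) (v h))).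
  { unfold vdot, sum3. repeat apply bigO_add; apply (bigO_mul 1 1); auto. }
  assert (HK : forall a b, bigO 1 (fun h => skew (v h) a b)).
  { intros a b. destruct a, b; simpl; try apply bigO0; try apply bigO_opp; auto. }
  assert (HK2 : forall a b, bigO 2 (fun h => mmul (skew (v h)) (skew (v h)) a b)).
  { intros a b. unfold mmul, sum3. repeat apply bigO_add; apply (bigO_mul 1 1); auto. }
  assert (Hsmall : near0 (fun h => 0 <= vdot (v h) (v h) <= 1)).
  { apply (near0_mono _ _ (bigO_small 1 _ Hx 1 ltac:(lra))). intros h _ H.
    pose proof (vdot_self_ge0 (v h)). rewrite Rabs_right in H by lra. lra. }
  assert (Hdom : forall (F : R -> R) c, (forall x, 0 <= x <= 1 -> Rabs (F x - c) <= x) ->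
            bigO 2 (fun h => F (vdot (v h) (v h)) - c)).
  { intros F c HF. apply bigO_dominated with (fun h => vdot (v h) (v h)); auto.
    apply (near0_mono _ _ Hsmall). intros h _ H.
    rewrite (Rabs_right (vdot _ _)) by lra. apply HF; lra. }
  apply (bigO_ext 3 (fun h => (sinc_sqrt (vdot (v h) (v h)) - 1) * skew (v h) i j +
       (versc_sqrt (vdot (v h) (v h)) - / 2) * mmul (skew (v h)) (skew (v h)) i j)).
  { intros h _. unfold rodrigues, madd, mscale. ring. }
  apply bigO_add.
  - apply (bigO_mul 2 1); auto. apply Hdom, sinc_sqrt_near1.
  - apply (bigO_weaken 3 4); [lia|]. apply (bigO_mul 2 2); auto. apply Hdom, versc_sqrt_near_half.
Qed.

Lemma rodrigues_expands n (v : R -> Vec) b c : (1 <= n <= 3)%nat -> vexpands n v (fun _ => 0) b c ->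
  mexpands n (fun h => rodrigues (v h)) mid (skew b)
    (madd (skew c) (mscale (/2) (mmul (skew b) (skew b)))).
Proof.
  intros Hn Hv i j. assert (Hv1 := vexpands_bigO1 n v b c ltac:(lia) Hv).
  set (q := fun h => mid i j + skew (v h) i j + / 2 * mmul (skew (v h)) (skew (v h)) i j).
  unfold expands.
  apply (bigO_ext n (fun h => (rodrigues (v h) i j - q h) + (q h - (mid i j + h * skew b i j
       + h * h * madd (skew c) (mscale (/2) (mmul (skew b) (skew b))) i j)))); [intros; ring|].
  apply bigO_add; [apply (bigO_weaken n 3); [lia|apply rodrigues_bigO3; auto]|].
  assert (Hq : expands n q (mid i j) (skew b i j) (madd (skew c) (mscale (/2) (mmul (skew b) (skew b))) i j)).
  { unfold q. destruct i, j; expand_solve. }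
  exact Hq.
Qed.

Lemma vec_bigO_uniform n (f : R -> Vec) : (forall k, bigO n (fun h => f h k)) ->
  exists C, 0 <= C /\ near0 (fun h => forall k, Rabs (f h k) <= C * h ^ n).
Proof.
  intros H. destruct (bigO_ge0 _ _ (H I0)) as [C0 [HC0 N0]].
  destruct (bigO_ge0 _ _ (H I1)) as [C1 [HC1 N1]]. destruct (bigO_ge0 _ _ (H I2)) as [C2 [HC2 N2]].
  exists (C0 + C1 + C2). split; [lra|].
  apply (near0_mono _ _ (near0_and _ _ N0 (near0_and _ _ N1 N2))). intros h Hh [B0 [B1 B2]] k.
  assert (0 <= h ^ n) by (apply pow_le; lra). destruct k; nra.
Qed.

(** * Local error of the scheme *)

Section LocalError.
Variables (m : R) (D W : Mat) (Phi dPhi : R -> R) (Om : R -> Vec) (E U : R -> Mat)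
  (Rc : R -> Mat) (wc : R -> Vec) (a b t0 : R).
Hypotheses (Hm : 0 < m) (HPhi_sm : smooth Phi) (HdPhi : forall x, derivable_pt_lim Phi x (dPhi x))
  (HOm : forall k, smooth (fun t => Om t k))
  (HE : forall i j, smooth (fun t => E t i j))
  (HU : forall i j, smooth (fun t => U t i j))
  (Hab : a < t0 < b)
  (HRode : forall t, a < t < b -> forall i j,
     derivable_pt_lim (fun s => Rc s i j) t (mmul (Rc t) (skew (vsub (Om t) (wc t))) i j))
  (Hwode : forall t, a < t < b -> forall k,
     derivable_pt_lim (fun s => wc s k) t
       ((vadd (vsub (vscale (- m) (cross (vsub (Om t) (wc t)) (wc t))) (mvmul D (wc t)))
              (vscale (dPhi (U0 (E t) W (Rc t) (U t))) (SL (Lmat (E t) W (U t)) (Rc t))) k) / m)).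

Definition Phi_derivs : nat -> R -> R := smooth_derivs Phi HPhi_sm.

Lemma Phi_derivs_continuous n x : continuity_pt (Phi_derivs n) x.
Proof. apply (derivable_lim_continuous _ (Phi_derivs (S n))). apply smooth_derivs_derivable. Qed.

Lemma dPhi_derivable x : derivable_pt_lim dPhi x (Phi_derivs 2%nat x).
Proof.
  replace dPhi with (Phi_derivs 1%nat); [apply smooth_derivs_derivable|].
  apply functional_extensionality. intros y. apply (uniqueness_limite Phi y); [|apply HdPhi].
  rewrite <- (smooth_derivs0 Phi HPhi_sm) at 1. apply smooth_derivs_derivable.
Qed.

Definition Omh (h : R) : Vec := Om (t0 + h).
Definition Eh (h : R) : Mat := E (t0 + h).
Definition Uh (h : R) : Mat := U (t0 + h).
Definition Rh (h : R) : Mat := Rc (t0 + h).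
Definition wh (h : R) : Vec := wc (t0 + h).

Definition dOm0 : Vec := fun k => smooth_derivs _ (HOm k) 1%nat t0.
Definition dE0 : Mat := fun i j => smooth_derivs _ (HE i j) 1%nat t0.
Definition dU0 : Mat := fun i j => smooth_derivs _ (HU i j) 1%nat t0.

Lemma Om_expands : vexpands 2 Omh (Om t0) dOm0 (fun _ => 0).
Proof. intros k. exact (smooth_derivs_expands (fun t => Om t k) (HOm k) t0). Qed.

Lemma E_expands : mexpands 2 Eh (E t0) dE0 (fun _ _ => 0).
Proof. intros i j. exact (smooth_derivs_expands (fun t => E t i j) (HE i j) t0). Qed.

Lemma U_expands : mexpands 2 Uh (U t0) dU0 (fun _ _ => 0).
Proof. intros i j. exact (smooth_derivs_expands (fun t => U t i j) (HU i j) t0). Qed.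

Definition feedback (Ei Ui R0 : Mat) : Vec := vscale (dPhi (U0 Ei W R0 Ui)) (SL (Lmat Ei W Ui) R0).
Definition R_field (R0 : Mat) (O w : Vec) : Mat := mmul R0 (skew (vsub O w)).
Definition w_field (O w F : Vec) : Vec := fun k =>
  (vadd (vsub (vscale (- m) (cross (vsub O w) w)) (mvmul D w)) F k) / m.

Definition feedback_h h := feedback (Eh h) (Uh h) (Rh h).
Definition R_field_h h := R_field (Rh h) (Omh h) (wh h).
Definition w_field_h h := w_field (Omh h) (wh h) (feedback_h h).

Definition R0 := Rc t0.
Definition w0 := wc t0.

(* The suffixes [0] and [1] denote the value at [h = 0] and the coefficient of [h] of an
   expansion; [Rb] stands for the coefficient of [h] in an expansion of the attitude. *)
Definition feedback0 := feedback (E t0) (U t0) R0.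
Definition L0 := Lmat (E t0) W (U t0).
Definition L1 := madd (Lmat dE0 W (U t0)) (Lmat (E t0) W dU0).
Definition residual0 := msub (E t0) (mmul R0 (U t0)).
Definition residual1 (Rb : Mat) := msub dE0 (madd (mmul Rb (U t0)) (mmul R0 dU0)).
Definition cost0 := U0 (E t0) W R0 (U t0).
Definition cost1 (Rb : Mat) :=
  / 2 * (frob (residual1 Rb) (mmul residual0 W) + frob residual0 (mmul (residual1 Rb) W)).
Definition SL0 := SL L0 R0.
Definition SL1 (Rb : Mat) := vadd (SL L1 R0) (SL L0 Rb).
Definition feedback1 (Rb : Mat) :=
  vadd (vscale (Phi_derivs 2 cost0 * cost1 Rb) SL0) (vscale (dPhi cost0) (SL1 Rb)).

Lemma cost_expands n (Rx : R -> Mat) Rb : (n <= 2)%nat -> mexpands n Rx R0 Rb (fun _ _ => 0) ->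
  expands n (fun h => U0 (Eh h) W (Rx h) (Uh h)) cost0 (cost1 Rb) 0.
Proof.
  intros Hn HR. pose proof E_expands. pose proof U_expands. eapply expands_drop2; [lia|].
  unfold cost0, cost1, residual1, residual0. expand_solve.
Qed.

Lemma SL_expands n (Rx : R -> Mat) Rb : (n <= 2)%nat -> mexpands n Rx R0 Rb (fun _ _ => 0) ->
  forall k, expands n (fun h => SL (Lmat (Eh h) W (Uh h)) (Rx h) k) (SL0 k) (SL1 Rb k) 0.
Proof.
  intros Hn HR k. pose proof E_expands. pose proof U_expands.
  unfold SL0, SL1, L0, L1. destruct k; (eapply expands_drop2; [lia|expand_solve]).
Qed.

Lemma feedback_expands n (Rx : R -> Mat) Rb : (n <= 2)%nat -> mexpands n Rx R0 Rb (fun _ _ => 0) ->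
  vexpands n (fun h => feedback (Eh h) (Uh h) (Rx h)) feedback0 (feedback1 Rb) (fun _ => 0).
Proof.
  intros Hn HR k.
  pose proof (expands_comp dPhi (Phi_derivs 2%nat) (Phi_derivs 3%nat) n _ _ _ _ dPhi_derivable
    (smooth_derivs_derivable Phi HPhi_sm 2%nat) (Phi_derivs_continuous 3%nat) Hn (cost_expands n Rx Rb Hn HR)) as Hp.
  eapply expands_drop2; [lia|].
  eapply expands_coef; [apply (expands_mul n _ _ _ _ _ _ _ _ ltac:(lia) Hp (SL_expands n Rx Rb Hn HR k))|..].
  - reflexivity.
  - unfold feedback1, vadd, vscale. ring.
  - reflexivity.
Qed.

Definition R_field0 := R_field R0 (Om t0) w0.
Definition R_field1 (Rb : Mat) (wb : Vec) :=
  madd (mmul Rb (skew (vsub (Om t0) w0))) (mmul R0 (skew (vsub dOm0 wb))).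
Definition w_field0 := w_field (Om t0) w0 feedback0.
Definition w_field1 (wb Fb : Vec) : Vec := fun k =>
  (vadd (vsub (vscale (- m) (vadd (cross (vsub dOm0 wb) w0) (cross (vsub (Om t0) w0) wb)))
              (mvmul D wb)) Fb k) / m.

Lemma fields_expand n Rb wb : (n <= 2)%nat ->
  mexpands n Rh R0 Rb (fun _ _ => 0) -> vexpands n wh w0 wb (fun _ => 0) ->
  mexpands n R_field_h R_field0 (R_field1 Rb wb) (fun _ _ => 0) /\
  vexpands n w_field_h w_field0 (w_field1 wb (feedback1 Rb)) (fun _ => 0).
Proof.
  intros Hn HR Hw. pose proof (feedback_expands n Rh Rb Hn HR) as HF. fold feedback_h in HF.
  pose proof Om_expands. split.
  - intros i j. unfold R_field_h, R_field, R_field0, R_field1.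
    destruct i, j; (eapply expands_drop2; [lia|expand_solve]).
  - intros k. unfold w_field_h, w_field, w_field0, w_field1.
    destruct k; (eapply expands_drop2; [lia|expand_solve]).
Qed.

Definition win : R := (b - t0) / 2.

Lemma win_pos : 0 < win.
Proof. unfold win. lra. Qed.

Lemma Rc_expands_of_field n G0 Gb : (n <= 2)%nat -> mexpands n R_field_h G0 Gb (fun _ _ => 0) ->
  mexpands (S n) Rh R0 G0 (fun i j => Gb i j / 2).
Proof.
  intros Hn HG i j.
  apply (expands_integrate n (fun s => Rc s i j) (fun t => R_field_h (t - t0) i j) t0 win _ _ 0 Hn win_pos).
  - intros t Ht. replace (R_field_h (t - t0) i j) with (mmul (Rc t) (skew (vsub (Om t) (wc t))) i j)
      by (unfold R_field_h, R_field, Rh, Omh, wh; replace (t0 + (t - t0)) with t by ring; reflexivity).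
    apply HRode. unfold win in Ht. lra.
  - eapply expands_ext; [|apply HG]. intros h _. simpl. replace (t0 + h - t0) with h by ring. reflexivity.
Qed.

Lemma wc_expands_of_field n G0 Gb : (n <= 2)%nat -> vexpands n w_field_h G0 Gb (fun _ => 0) ->
  vexpands (S n) wh w0 G0 (fun k => Gb k / 2).
Proof.
  intros Hn HG k.
  apply (expands_integrate n (fun s => wc s k) (fun t => w_field_h (t - t0) k) t0 win _ _ 0 Hn win_pos).
  - intros t Ht. unfold w_field_h, w_field, feedback_h, feedback, Rh, Eh, Uh, Omh, wh.
    replace (t0 + (t - t0)) with t by ring. apply Hwode. unfold win in Ht. lra.
  - eapply expands_ext; [|apply HG]. intros h _. simpl. replace (t0 + h - t0) with h by ring. reflexivity.
Qed.

(* Feeding the ODE its own expansion twice raises the order from [0] to [3]. *)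
Lemma exact_expands : mexpands 3 Rh R0 R_field0 (fun i j => R_field1 R_field0 w_field0 i j / 2) /\
  vexpands 3 wh w0 w_field0 (fun k => w_field1 w_field0 (feedback1 R_field0) k / 2).
Proof.
  assert (HR0 : mexpands 0 Rh R0 (fun _ _ => 0) (fun _ _ => 0)).
  { intros i j. apply expands0_of_bigO0, (derivable_bigO0 (fun s => Rc s i j) t0 _ (HRode t0 Hab i j)). }
  assert (Hw0 : vexpands 0 wh w0 (fun _ => 0) (fun _ => 0)).
  { intros k. apply expands0_of_bigO0, (derivable_bigO0 (fun s => wc s k) t0 _ (Hwode t0 Hab k)). }
  destruct (fields_expand 0 _ _ ltac:(lia) HR0 Hw0) as [HgR0 Hgw0].
  pose proof (mexpands_drop2 1 _ _ _ _ ltac:(lia) (Rc_expands_of_field 0 _ _ ltac:(lia) HgR0)) as HR1.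
  pose proof (vexpands_drop2 1 _ _ _ _ ltac:(lia) (wc_expands_of_field 0 _ _ ltac:(lia) Hgw0)) as Hw1.
  destruct (fields_expand 1 _ _ ltac:(lia) HR1 Hw1) as [HgR1 Hgw1].
  pose proof (mexpands_drop2 2 _ _ _ _ ltac:(lia) (Rc_expands_of_field 1 _ _ ltac:(lia) HgR1)) as HR2.
  pose proof (vexpands_drop2 2 _ _ _ _ ltac:(lia) (wc_expands_of_field 1 _ _ ltac:(lia) Hgw1)) as Hw2.
  destruct (fields_expand 2 _ _ ltac:(lia) HR2 Hw2) as [HgR2 Hgw2].
  split; [apply (Rc_expands_of_field 2 _ _ ltac:(lia) HgR2)
         |apply (wc_expands_of_field 2 _ _ ltac:(lia) Hgw2)].
Qed.

Definition mid_mat (h : R) : Mat := madd (mscale m mid) (mscale (h / 2) D).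
Definition half_rot0 (h : R) : Mat := rodrigues (half_arg h (Om t0) w0).
Definition mid_rhs (h : R) : Vec := vadd (mvmul (half_rot0 h) (vscale m w0)) (vscale (h / 2) feedback0).
Definition w_mid (h : R) : Vec := mvmul (inv3 (mid_mat h)) (mid_rhs h).
Definition Om_mid (h : R) : Vec := vscale (/ 2) (vadd (Om t0) (Omh h)).
Definition rot_arg (h : R) : Vec := vscale h (vsub (Om_mid h) (w_mid h)).
Definition rot_next (h : R) : Mat := rodrigues (rot_arg h).
Definition R_next (h : R) : Mat := mmul R0 (rot_next h).

Definition half_arg1 : Vec := vscale (- (1/2)) (vsub (Om t0) w0).
Definition mid_rhs1 : Vec := vadd (mvmul (skew half_arg1) (vscale m w0)) (vscale (/ 2) feedback0).
Definition mid_rhs2 : Vec :=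
  mvmul (madd (skew (fun _ => 0)) (mscale (/ 2) (mmul (skew half_arg1) (skew half_arg1)))) (vscale m w0).
Definition w_mid1 : Vec := fun k => (mid_rhs1 k - mvmul D w0 k / 2) / m.
Definition w_mid2 : Vec := fun k => (mid_rhs2 k - mvmul D w_mid1 k / 2) / m.

Lemma mid_rhs_expands : vexpands 3 mid_rhs (vscale m w0) mid_rhs1 mid_rhs2.
Proof.
  assert (HQ : mexpands 3 half_rot0 mid (skew half_arg1)
                 (madd (skew (fun _ => 0)) (mscale (/2) (mmul (skew half_arg1) (skew half_arg1))))).
  { apply rodrigues_expands; [lia|]. intros k. unfold half_arg, half_arg1. destruct k; expand_solve. }
  intros k. unfold mid_rhs, mid_rhs1, mid_rhs2. destruct k; expand_solve.
Qed.

Lemma det_mid_mat_lower : near0 (fun h => m ^ 3 / 2 <= det3 (mid_mat h)).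
Proof.
  assert (J : exists x y, expands 1 (fun h => det3 (mid_mat h)) (m ^ 3) x y).
  { do 2 eexists. eapply expands_coef.
    - unfold mid_mat, det3, cof, sum3, madd, mscale, mid, Rdiv. simpl. expand_rec.
    - simpl; ring.
    - reflexivity.
    - reflexivity. }
  destruct J as [x [y J]].
  assert (J' : bigO 1 (fun h => det3 (mid_mat h) - m ^ 3)).
  { eapply bigO_ext; [|exact (bigO_add _ _ _ J (bigO1_poly x y))]. intros; simpl; ring. }
  assert (0 < m ^ 3) by (apply pow_lt; lra).
  apply (near0_mono _ _ (bigO_small 0 _ J' (m ^ 3 / 2) ltac:(lra))). intros h _ Hh.
  unfold Rabs in Hh. destruct Rcase_abs in Hh; lra.
Qed.

(* The fixed-point form of [(m I + h/2 D) w_mid = mid_rhs], from which the expansion of [w_mid]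
   is bootstrapped. *)
Lemma w_mid_eq : near0 (fun h => forall i,
  w_mid h i = / m * mid_rhs h i - h * (/ (2 * m) * mvmul D (w_mid h) i)).
Proof.
  apply (near0_mono _ _ det_mid_mat_lower). intros h _ Hdet i.
  assert (Hdet' : det3 (mid_mat h) <> 0) by (assert (0 < m ^ 3) by (apply pow_lt; lra); lra).
  pose proof (mvmul_inv3 (mid_mat h) (mid_rhs h) Hdet' i) as EE. fold (w_mid h) in EE.
  rewrite <- EE. unfold mid_mat, mvmul, madd, mscale, mid, sum3. destruct i; simpl; field; lra.
Qed.

Lemma w_mid_bigO0 i : bigO 0 (fun h => w_mid h i).
Proof.
  assert (Hinv : bigO 0 (fun h => / det3 (mid_mat h))).
  { assert (0 < m ^ 3) by (apply pow_lt; lra).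
    exists (2 / m ^ 3). apply (near0_mono _ _ det_mid_mat_lower). intros h _ Hdet.
    rewrite pow_O, Rmult_1_r, Rabs_right by (apply Rle_ge, Rlt_le, Rinv_0_lt_compat; lra).
    replace (2 / m ^ 3) with (/ (m ^ 3 / 2)) by (field; lra). apply Rinv_le_contravar; lra. }
  assert (Hcof : forall k l, bigO 0 (fun h => cof (mid_mat h) k l)).
  { intros k l. assert (J : exists x y z, expands 0 (fun h => cof (mid_mat h) k l) x y z).
    { unfold mid_mat, cof, madd, mscale, mid, Rdiv. destruct k, l; simpl; do 3 eexists; expand_rec. }
    destruct J as [x [y [z J]]]. eapply expands_bigO0; eauto. }
  assert (HZ : forall k, bigO 0 (fun h => mid_rhs h k)) by (intros k; eapply expands_bigO0, mid_rhs_expands).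
  unfold w_mid, mvmul, inv3, sum3, Rdiv.
  repeat apply bigO_add; apply (bigO_mul 0 0); auto; apply (bigO_mul 0 0); auto.
Qed.

Lemma w_mid_expands_step k a1 a2 a3 : (k <= 2)%nat -> vexpands k w_mid a1 a2 a3 ->
  vexpands (S k) w_mid (fun i => / m * (m * w0 i)) (fun i => / m * mid_rhs1 i - / (2 * m) * mvmul D a1 i)
     (fun i => / m * mid_rhs2 i - / (2 * m) * mvmul D a2 i).
Proof.
  intros Hk H i.
  eapply expands_ext_near; [apply (near0_mono _ _ w_mid_eq); intros h _ Hrel; symmetry; apply Hrel|].
  assert (J1 : expands (S k) (fun h => / m * mid_rhs h i)
                 (/ m * (m * w0 i)) (/ m * mid_rhs1 i) (/ m * mid_rhs2 i)).
  { apply expands_scale; [lia|]. eapply expands_weaken; [|apply mid_rhs_expands]. lia. }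
  assert (J2 : expands k (fun h => / (2 * m) * mvmul D (w_mid h) i)
                 (/ (2 * m) * mvmul D a1 i) (/ (2 * m) * mvmul D a2 i) (/ (2 * m) * mvmul D a3 i)).
  { destruct i; expand_solve. }
  eapply expands_coef; [apply (expands_sub _ _ _ _ _ _ _ _ _ J1 (expands_hmul _ _ _ _ _ Hk J2))|..]; ring.
Qed.

Lemma w_mid_expands : vexpands 3 w_mid w0 w_mid1 w_mid2.
Proof.
  assert (H0 : vexpands 0 w_mid (fun _ => 0) (fun _ => 0) (fun _ => 0))
    by (intros i; apply expands0_of_bigO0, w_mid_bigO0).
  pose proof (w_mid_expands_step 2 _ _ _ ltac:(lia)
    (w_mid_expands_step 1 _ _ _ ltac:(lia) (w_mid_expands_step 0 _ _ _ ltac:(lia) H0))) as H3.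
  intros i. eapply expands_coef; [apply H3|..]; unfold w_mid2, w_mid1, mvmul, sum3; field; lra.
Qed.

Definition rot_arg1 : Vec := vsub (Om t0) w0.
Definition rot_arg2 : Vec := vsub (vscale (/ 2) dOm0) w_mid1.

Lemma rot_arg_expands : vexpands 3 rot_arg (fun _ => 0) rot_arg1 rot_arg2.
Proof.
  intros k. pose proof Om_expands. pose proof w_mid_expands.
  assert (J : expands 2 (fun h => Om_mid h k - w_mid h k) (rot_arg1 k) (rot_arg2 k) (0 - w_mid2 k)).
  { unfold Om_mid, rot_arg1, rot_arg2. destruct k; expand_solve. }
  exact (expands_hmul 2 _ _ _ _ ltac:(lia) J).
Qed.

Lemma R_next_expands : mexpands 3 R_next R0 (mmul R0 (skew rot_arg1))
  (mmul R0 (madd (skew rot_arg2) (mscale (/2) (mmul (skew rot_arg1) (skew rot_arg1))))).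
Proof.
  pose proof (rodrigues_expands 3 rot_arg rot_arg1 rot_arg2 ltac:(lia) rot_arg_expands) as HQ.
  fold rot_next in HQ.
  intros i j. unfold R_next. destruct i, j; expand_solve.
Qed.

Lemma R_next_error i j : bigO 3 (fun h => R_next h i j - Rh h i j).
Proof.
  destruct exact_expands as [HR _].
  apply (expands_unique 3 _ _ (R0 i j) (R_field0 i j) (R_field1 R_field0 w_field0 i j / 2)); [|apply HR].
  eapply expands_coef; [apply R_next_expands|reflexivity|reflexivity|].
  unfold rot_arg2, rot_arg1, w_mid1, mid_rhs1, half_arg1, R_field1, R_field0, R_field, w_field0, w_field.
  destruct i, j; unfold_linalg; simpl; field; lra.
Qed.

Definition feedback_next_h (h : R) : Vec := vscale h (feedback (Eh h) (Uh h) (R_next h)).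
Definition implicit_rhs (h : R) : Vec :=
  vadd (mvmul (msub (mscale m mid) (mscale (h / 2) D)) (w_mid h)) (vscale (/ 2) (feedback_next_h h)).
Definition exact_half_arg (h : R) : Vec := half_arg h (Omh h) (wh h).
Definition exact_half_rot (h : R) : Mat := rodrigues (exact_half_arg h).
Definition exact_half_arg2 : Vec := vscale (- (1/2)) (vsub dOm0 w_field0).

Lemma feedback_next_h_expands : vexpands 3 feedback_next_h (fun _ => 0) feedback0 (feedback1 R_field0).
Proof.
  assert (HR2 : mexpands 2 R_next R0 R_field0 (fun _ _ => 0)).
  { intros i j. eapply expands_drop2; [lia|]. eapply expands_weaken; [|apply R_next_expands]. lia. }
  intros k. exact (expands_hmul 2 _ _ _ _ ltac:(lia) (feedback_expands 2 R_next R_field0 ltac:(lia) HR2 k)).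
Qed.

Lemma exact_half_arg_expands : vexpands 3 exact_half_arg (fun _ => 0) half_arg1 exact_half_arg2.
Proof.
  destruct exact_expands as [_ Hw]. pose proof Om_expands. intros k.
  assert (J : expands 2 (fun h => - (1/2) * (Omh h k - wh h k)) (half_arg1 k) (exact_half_arg2 k)
                (- (1/2) * (0 - w_field1 w_field0 (feedback1 R_field0) k / 2))).
  { unfold half_arg1, exact_half_arg2. destruct k; expand_solve. }
  eapply expands_ext; [|exact (expands_hmul 2 _ _ _ _ ltac:(lia) J)].
  intros h _. unfold exact_half_arg, half_arg, vscale, vsub. field.
Qed.

Lemma exact_residual k :
  bigO 3 (fun h => m * wh h k - mvmul (exact_half_rot h) (implicit_rhs h) k).
Proof.
  destruct exact_expands as [_ Hw].
  pose proof (rodrigues_expands 3 _ _ _ ltac:(lia) exact_half_arg_expands) as HQ. fold exact_half_rot in HQ.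
  pose proof w_mid_expands. pose proof feedback_next_h_expands.
  apply (expands_unique 3 _ _ (m * w0 k) (m * w_field0 k)
           (m * (w_field1 w_field0 (feedback1 R_field0) k / 2))).
  - apply expands_scale; [lia|apply Hw].
  - unfold implicit_rhs. destruct k; unfold_linalg; simpl; (eapply expands_coef; [expand_rec| | | ]);
      unfold exact_half_arg2, half_arg1, w_mid2, w_mid1, mid_rhs2, mid_rhs1, half_arg1,
        w_field1, w_field0, w_field; unfold_linalg; simpl; field; lra.
Qed.

Lemma step_data_bounded : exists B, 1 <= B /\ near0 (fun h =>
  (forall k, Rabs (implicit_rhs h k) <= B) /\ (forall k, Rabs (Omh h k) <= B) /\
  (forall k, Rabs (wh h k) <= 2 * B / m)).
Proof.
  assert (HV : forall k, bigO 0 (fun h => implicit_rhs h k)).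
  { intros k. pose proof w_mid_expands. pose proof feedback_next_h_expands.
    assert (J : exists x y z, expands 0 (fun h => implicit_rhs h k) x y z).
    { unfold implicit_rhs. destruct k; unfold_linalg; simpl; do 3 eexists; expand_rec. }
    destruct J as [x [y [z J]]]. eapply expands_bigO0; eauto. }
  destruct exact_expands as [_ Hw].
  destruct (vec_bigO_uniform 0 _ HV) as [BV [HBV NV]].
  destruct (vec_bigO_uniform 0 Omh (fun k => expands_bigO0 _ _ _ _ _ (Om_expands k))) as [BO [HBO NO]].
  destruct (vec_bigO_uniform 0 wh (fun k => expands_bigO0 _ _ _ _ _ (Hw k))) as [BW [HBW NW]].
  exists (BV + BO + m * BW / 2 + 1). assert (0 <= m * BW / 2) by (apply Rmult_le_pos; nra).
  split; [lra|].
  apply (near0_mono _ _ (near0_and _ _ NV (near0_and _ _ NO NW))). intros h _ [BV' [BO' BW']].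
  simpl in *. rewrite Rmult_1_r in *. repeat split; intros k.
  - pose proof (BV' k). lra.
  - pose proof (BO' k). lra.
  - pose proof (BW' k). apply (Rmult_le_reg_l m); [lra|].
    replace (m * (2 * (BV + BO + m * BW / 2 + 1) / m)) with (2 * (BV + BO + 1) + m * BW) by (field; lra).
    assert (m * Rabs (wh h k) <= m * BW) by (apply Rmult_le_compat_l; lra). lra.
Qed.

Lemma local_error_bound : exists C, 0 < C /\ near0 (fun h =>
  (exists w1, forall k, m * w1 k = mvmul (rodrigues (half_arg h (Omh h) w1)) (implicit_rhs h) k) /\
  (forall w1, (forall k, m * w1 k = mvmul (rodrigues (half_arg h (Omh h) w1)) (implicit_rhs h) k) ->
     mnorm (msub (R_next h) (Rh h)) + vnorm (vsub w1 (wh h)) <= C * h ^ 3)).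
Proof.
  assert (HR : bigO 3 (fun h => mnorm (msub (R_next h) (Rh h)))).
  { unfold mnorm, sum3, msub. repeat apply bigO_add; apply bigO_abs; apply R_next_error. }
  destruct (bigO_ge0 _ _ HR) as [CR [HCR NR]].
  destruct (vec_bigO_uniform 3 _ exact_residual) as [Cg [HCg Ng]].
  destruct step_data_bounded as [B [HB NB]].
  assert (HBm : 0 < B + 2 * B / m) by (assert (0 < 2 * B / m) by (apply Rdiv_lt_0_compat; lra); lra).
  assert (Hsmall : near0 (fun h => h * (B + 2 * B / m) <= 1 /\ 108 * h * B <= m)).
  { apply (near0_mono _ _ (near0_and _ _ (near0_lt (/ (B + 2 * B / m)) ltac:(apply Rinv_0_lt_compat; lra))
                                          (near0_lt (m / (108 * B)) ltac:(apply Rdiv_lt_0_compat; lra)))).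
    intros h Hh [H1 H2]. split.
    - apply (Rmult_lt_compat_r (B + 2 * B / m)) in H1; auto. rewrite Rinv_l in H1 by lra. lra.
    - apply (Rmult_lt_compat_r (108 * B)) in H2; [|lra].
      replace (m / (108 * B) * (108 * B)) with m in H2 by (field; lra). lra. }
  exists (CR + 6 * Cg / m + 1). split.
  { assert (0 <= 6 * Cg / m) by (apply Rmult_le_pos; [lra|apply Rlt_le, Rinv_0_lt_compat; lra]). lra. }
  apply (near0_mono _ _ (near0_and _ _ NR (near0_and _ _ Ng (near0_and _ _ NB Hsmall)))).
  intros h Hh [HRh [Hgh [[HV [HO HW]] [Hs1 Hs2]]]]. rewrite Rabs_right in HRh by
    (apply Rle_ge; unfold mnorm, sum3; repeat apply Rplus_le_le_0_compat; apply Rabs_pos).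
  split; [apply (implicit_step_solvable m h B (Omh h) (implicit_rhs h)); auto; lra|].
  intros w1 Hw1.
  pose proof (implicit_step_stable m h B (Omh h) (implicit_rhs h) ltac:(lra) ltac:(lra) ltac:(lra)
    HV HO Hs1 Hs2 (wh h) w1 (Cg * h ^ 3) HW Hw1 Hgh) as HEs.
  change (vnorm (vsub w1 (wh h))) with (vdist w1 (wh h)).
  assert (0 < h ^ 3) by (apply pow_lt; lra).
  replace (6 * (Cg * h ^ 3) / m) with (6 * Cg / m * h ^ 3) in HEs by (field; lra). nra.
Qed.

Lemma scheme_w_mid h :
  mvmul (inv3 (madd (mscale m mid) (mscale (h / 2) D)))
    (vadd (mvmul (mexp (mscale (- (h / 2)) (skew (vsub (Om t0) (wc t0))))) (vscale m (wc t0)))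
          (vscale (h / 2 * dPhi (U0 (E t0) W (Rc t0) (U t0))) (SL (Lmat (E t0) W (U t0)) (Rc t0))))
  = w_mid h.
Proof.
  unfold w_mid, mid_rhs, half_rot0, half_arg, mid_mat, feedback0, feedback, w0, R0.
  rewrite mscale_skew, mexp_skew. do 2 f_equal.
  apply functional_extensionality; intro k. unfold vscale. ring.
Qed.

Lemma scheme_R_next h :
  mmul (Rc t0) (mexp (skew (vscale h (vsub (vscale (/ 2) (vadd (Om t0) (Om (t0 + h)))) (w_mid h)))))
  = R_next h.
Proof. unfold R_next, rot_next, rot_arg, Om_mid, Omh, R0. rewrite mexp_skew. reflexivity. Qed.

Lemma scheme_step_iff h w1 :
  vscale m w1 = mvmul (mexp (mscale (- (h / 2)) (skew (vsub (Om (t0 + h)) w1))))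
    (vadd (mvmul (msub (mscale m mid) (mscale (h / 2) D)) (w_mid h))
          (vscale (h / 2 * dPhi (U0 (E (t0 + h)) W (R_next h) (U (t0 + h))))
                  (SL (Lmat (E (t0 + h)) W (U (t0 + h))) (R_next h))))
  <-> forall k, m * w1 k = mvmul (rodrigues (half_arg h (Omh h) w1)) (implicit_rhs h) k.
Proof.
  rewrite mscale_skew, mexp_skew.
  replace (vadd (mvmul (msub (mscale m mid) (mscale (h / 2) D)) (w_mid h)) _) with (implicit_rhs h).
  - split; [intros Hw k; change (m * w1 k) with (vscale m w1 k); rewrite Hw; reflexivity|].
    intros Hw. apply functional_extensionality, Hw.
  - unfold implicit_rhs, feedback_next_h, feedback, Eh, Uh. f_equal.
    apply functional_extensionality; intro k. unfold vscale. field.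
Qed.

End LocalError.

Theorem proposition1
  (m : R) (D W : Mat) (Phi dPhi : R -> R)
  (Om : R -> Vec) (E U : R -> Mat)
  (Rc : R -> Mat) (wc : R -> Vec) (a b t0 : R)
  (Hm : 0 < m)
  (HDs : symmetric D) (HDp : pos_def D)
  (HWs : symmetric W) (HWp : pos_def W)
  (HPhi_sm : smooth Phi)
  (HdPhi : forall x, derivable_pt_lim Phi x (dPhi x))
  (HPhi0 : Phi 0 = 0)
  (HPhi_nn : forall x, 0 <= x -> 0 <= Phi x)
  (HdPhi_pos : forall x, 0 <= x -> 0 < dPhi x)
  (HOm : forall k, smooth (fun t => Om t k))
  (HE : forall i j, smooth (fun t => E t i j))
  (HU : forall i j, smooth (fun t => U t i j))
  (Hab : a < t0 < b)
  (HR0 : is_rotation (Rc t0))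
  (HRode : forall t, a < t < b -> forall i j,
     derivable_pt_lim (fun s => Rc s i j) t
       (mmul (Rc t) (skew (vsub (Om t) (wc t))) i j))
  (Hwode : forall t, a < t < b -> forall k,
     derivable_pt_lim (fun s => wc s k) t
       ((vadd (vsub (vscale (- m) (cross (vsub (Om t) (wc t)) (wc t)))
                    (mvmul D (wc t)))
              (vscale (dPhi (U0 (E t) W (Rc t) (U t)))
                      (SL (Lmat (E t) W (U t)) (Rc t))) k) / m)) :
  exists C h0 : R, 0 < C /\ 0 < h0 /\
    forall h : R, 0 < h < h0 ->
      let t1 := t0 + h in
      let R0 := Rc t0 in
      let w0 := wc t0 in
      let Omhat0 := vsub (Om t0) w0 in
      let whalf :=
        mvmul (inv3 (madd (mscale m mid) (mscale (h / 2) D)))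
          (vadd (mvmul (mexp (mscale (- (h / 2)) (skew Omhat0))) (vscale m w0))
                (vscale (h / 2 * dPhi (U0 (E t0) W R0 (U t0)))
                        (SL (Lmat (E t0) W (U t0)) R0))) in
      let Omhalf := vscale (/ 2) (vadd (Om t0) (Om t1)) in
      let R1 := mmul R0 (mexp (skew (vscale h (vsub Omhalf whalf)))) in
      let step_eq (w1 : Vec) : Prop :=
        vscale m w1 =
        mvmul (mexp (mscale (- (h / 2)) (skew (vsub (Om t1) w1))))
          (vadd (mvmul (msub (mscale m mid) (mscale (h / 2) D)) whalf)
                (vscale (h / 2 * dPhi (U0 (E t1) W R1 (U t1)))
                        (SL (Lmat (E t1) W (U t1)) R1))) in
      (exists w1, step_eq w1) /\
      forall w1, step_eq w1 ->
        mnorm (msub R1 (Rc t1)) + vnorm (vsub w1 (wc t1)) <= C * h ^ 3.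
Proof.
  destruct (local_error_bound m D W Phi dPhi Om E U Rc wc a b t0 Hm HPhi_sm HdPhi HOm HE HU Hab
              HRode Hwode) as [C [HC [h0 [Hh0 Hbound]]]].
  exists C, h0. split; [exact HC|split; [exact Hh0|]]. intros h Hh. cbv zeta.
  rewrite scheme_w_mid, scheme_R_next.
  destruct (Hbound h Hh) as [[w1 Hw1] Herr]. split.
  - exists w1. apply scheme_step_iff, Hw1.
  - intros w2 Hw2. apply Herr, scheme_step_iff, Hw2.
Qed.
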